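(* Consider the process $\dot x(t)=Ax(t)+Bu(t)+d(t)$, $y(t)=x(t)+n(t)$, $x(0)=x_0$, in closed loop with the packetized, buffered remote control law described in the context, and let the actuator sampling period $\delta=\Delta/b$ ($b\in\mathbb N_1$) satisfy $$\delta\le \frac{1}{\mu_A}\log\!\Big[\Big(\frac{\sigma}{1+\sigma}\Big)\frac{\mu_A}{\max\{\|\Phi\|,1\}}+1\Big]\quad\text{if }\mu_A>0,\qquad \delta\le \Big(\frac{\sigma}{1+\sigma}\Big)\frac{1}{\max\{\|\Phi\|,1\}}\quad\text{if }\mu_A\le 0,$$ where $\sigma>0$ satisfies $\gamma_1-\sigma\gamma_2>0$. Then there exists a constant $\rho>0$ such that for every $m\in\mathbb N_0$, $$\|\phi(t)\|\le \sigma\|x(t)\|+\rho\,\|w_t\|_\infty\qquad\text{for all } t\in[z_m,\min\{z_m+h\delta,\,z_{m+1}\}).$$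
   Context: Process: $x(t)\in\mathbb R^n$, $u(t)\in\mathbb R^m$, $(A,B)$ stabilizable, $d,n:\mathbb R_{\ge0}\to\mathbb R^n$ unknown bounded measurable disturbance and measurement noise; $w:=[d'\;n']'$ and $\|w_t\|_\infty:=\sup_{s\in[0,t]}\|w(s)\|$. Norms are Euclidean / spectral. Network: transmission attempts at $t_k=k\Delta$, $k\in\mathbb N_0$, $\Delta>0$. A Denial-of-Service (DoS) signal is given by a sequence of off/on transition times $h_0<h_1<\dots$ with durations $\tau_n\ge0$; $H_n:=\{h_n\}\cup[h_n,h_n+\tau_n)$. A transmission attempt at $t_k$ fails iff $t_k\in\bigcup_n H_n$; $z_0<z_1<\dots$ denotes the increasing sequence of successful transmission times (which are assumed to exist). Controller: $K$ is a matrix such that $\Phi:=A+BK$ is Hurwitz. $\delta:=\Delta/b$, $b\in\mathbb N_1$; $A_\delta:=e^{A\delta}$, $B_\delta:=\int_0^\delta e^{A\tau}B\,d\tau$; $h\in\mathbb N_1$ is the buffer size. At each $z_m$ the controller computes $\alpha_0(z_m)=y(z_m)$, $u_p(z_m)=K\alpha_p(z_m)$ and $\alpha_{p+1}(z_m)=A_\delta\alpha_p(z_m)+B_\delta u_p(z_m)$ for $p=0,\dots,h-2$, and sends $u_0(z_m),\dots,u_{h-1}(z_m)$ to the actuator buffer. Let $I_p(z_m):=[z_m+p\delta,\min\{z_m+(p+1)\delta,z_{m+1}\})$ for $p=0,\dots,h-2$ and $I_{h-1}(z_m):=[z_m+(h-1)\delta,z_{m+1})$ (possibly empty). The applied input is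 $u(t)=0$ for $t\in[0,z_0)$ and $u(t)=u_p(z_m)$ for $t\in I_p(z_m)$, $p=0,\dots,h-1$. The prediction error is $\phi(t):=\alpha_p(z_m)-x(t)$ for $t\in I_p(z_m)$. Constants: $M$ is any symmetric positive definite matrix and $P$ the solution of $\Phi'P+P\Phi+M=0$; $\gamma_1$ is the smallest eigenvalue of $M$, $\gamma_2:=\|2PBK\|$; $\mu_A$ is the logarithmic norm of $A$, i.e. the largest eigenvalue of $(A+A')/2$. *)

(* classical real numbers (Reals). Vectors of R^k are modelled as
   [nat -> R] and matrices as [nat -> nat -> R]; only indices below the relevant
   dimension are ever used. *)
From Stdlib Require Import Reals Lra Lia Factorial.
Open Scope R_scope.

Definition vec := nat -> R.
Definition mat := nat -> nat -> R.

Fixpoint fsum (k : nat) (f : nat -> R) : R :=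
  match k with O => 0 | S k' => fsum k' f + f k' end.

Definition mv (c : nat) (M : mat) (v : vec) : vec :=
  fun i => fsum c (fun j => M i j * v j).
Definition mm (k : nat) (M N : mat) : mat :=
  fun i j => fsum k (fun l => M i l * N l j).
Definition madd (M N : mat) : mat := fun i j => M i j + N i j.
Definition mscal (a : R) (M : mat) : mat := fun i j => a * M i j.
Definition mtr (M : mat) : mat := fun i j => M j i.
Definition vadd (u v : vec) : vec := fun i => u i + v i.
Definition vsub (u v : vec) : vec := fun i => u i - v i.
Definition idm : mat := fun i j => if Nat.eqb i j then 1 else 0.

Fixpoint mpow (k : nat) (A : mat) (p : nat) : mat :=
  match p with O => idm | S p' => mm k (mpow k A p') A end.

Definition vnorm (k : nat) (v : vec) : R := sqrt (fsum k (fun i => v i ^ 2)).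
Definition vnonzero (k : nat) (v : vec) : Prop := exists i, (i < k)%nat /\ v i <> 0.

Definition is_spec_norm (r c : nat) (M : mat) (nrm : R) : Prop :=
  is_lub (fun s => exists v, vnorm c v <= 1 /\ s = vnorm r (mv c M v)) nrm.

Definition symmetric (k : nat) (M : mat) : Prop :=
  forall i j, (i < k)%nat -> (j < k)%nat -> M i j = M j i.
Definition pos_def (k : nat) (M : mat) : Prop :=
  symmetric k M /\
  forall v, vnonzero k v -> fsum k (fun i => v i * mv k M v i) > 0.

(* real eigenpair (used for symmetric matrices, whose eigenvalues are all real) *)
Definition real_eigen (k : nat) (M : mat) (l : R) : Prop :=
  exists v, vnonzero k v /\ forall i, (i < k)%nat -> mv k M v i = l * v i.
Definition is_min_eig (k : nat) (M : mat) (g : R) : Prop :=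
  real_eigen k M g /\ forall l, real_eigen k M l -> g <= l.
Definition is_max_eig (k : nat) (M : mat) (g : R) : Prop :=
  real_eigen k M g /\ forall l, real_eigen k M l -> l <= g.

Definition is_log_norm (k : nat) (A : mat) (mu : R) : Prop :=
  is_max_eig k (mscal (/2) (madd A (mtr A))) mu.

(* complex eigenvalue a + i b with eigenvector p + i q *)
Definition complex_eigen (k : nat) (A : mat) (a b : R) : Prop :=
  exists p q : vec, (vnonzero k p \/ vnonzero k q) /\
    forall i, (i < k)%nat ->
      mv k A p i = a * p i - b * q i /\ mv k A q i = b * p i + a * q i.
Definition hurwitz (k : nat) (A : mat) : Prop :=
  forall a b, complex_eigen k A a b -> a < 0.
Definition stabilizable (k l : nat) (A B : mat) : Prop :=
  exists K : mat, hurwitz k (madd A (mm l B K)).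

Definition is_expm (k : nat) (A : mat) (t : R) (E : mat) : Prop :=
  forall i j, (i < k)%nat -> (j < k)%nat ->
    infinite_sum (fun p => t ^ p / INR (fact p) * mpow k A p i j) (E i j).

Definition is_Bdelta (k l : nat) (A B : mat) (delta : R) (Bd : mat) : Prop :=
  exists E : R -> mat, (forall tau, is_expm k A tau (E tau)) /\
    forall i j, (i < k)%nat -> (j < l)%nat ->
      exists pr : Riemann_integrable (fun tau => mm k (E tau) B i j) 0 delta,
        RiemannInt pr = Bd i j.

Definition outer_le (E : R -> Prop) (r : R) : Prop :=
  forall eps, eps > 0 -> exists a b : nat -> R,
    (forall p, a p <= b p) /\
    (forall x, E x -> exists p, a p < x < b p) /\
    (forall K, fsum K (fun p => b p - a p) <= r + eps).
Definition null_set (E : R -> Prop) : Prop := outer_le E 0.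
Definition leb_measurable_set (E : R -> Prop) : Prop :=
  forall (S : R -> Prop) r, outer_le S r ->
    exists r1 r2, r1 + r2 <= r /\
      outer_le (fun x => S x /\ E x) r1 /\ outer_le (fun x => S x /\ ~ E x) r2.
Definition measurable_fun (f : R -> R) : Prop :=
  forall c, leb_measurable_set (fun t => 0 <= t /\ f t > c).
Definition measurable_vfun (k : nat) (f : R -> vec) : Prop :=
  forall i, (i < k)%nat -> measurable_fun (fun t => f t i).
Definition bounded_vfun (k : nat) (f : R -> vec) : Prop :=
  exists c, forall t, 0 <= t -> vnorm k (f t) <= c.

Definition abs_cont_on (f : R -> R) (a b : R) : Prop :=
  forall eps, eps > 0 -> exists eta, eta > 0 /\
    forall (K : nat) (l r : nat -> R),
      (forall p, (p < K)%nat -> a <= l p /\ l p <= r p /\ r p <= b) ->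
      (forall p, (S p < K)%nat -> r p <= l (S p)) ->
      fsum K (fun p => r p - l p) < eta ->
      fsum K (fun p => Rabs (f (r p) - f (l p))) < eps.

Definition is_solution (nx nu : nat) (A B : mat) (u d : R -> vec) (x0 : vec)
  (x : R -> vec) : Prop :=
  (forall i, (i < nx)%nat -> x 0 i = x0 i) /\
  (forall i T, (i < nx)%nat -> 0 <= T -> abs_cont_on (fun s => x s i) 0 T) /\
  null_set (fun t => 0 <= t /\ ~ (forall i, (i < nx)%nat ->
     derivable_pt_lim (fun s => x s i) t
       (mv nx A (x t) i + mv nu B (u t) i + d t i))).

Definition in_dos (h tau : nat -> R) (t : R) : Prop :=
  exists j, t = h j \/ (h j <= t /\ t < h j + tau j).
Definition successful (Delta : R) (h tau : nat -> R) (t : R) : Prop :=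
  exists k : nat, t = INR k * Delta /\ ~ in_dos h tau t.
Definition success_seq (Delta : R) (h tau : nat -> R) (z : nat -> R) : Prop :=
  (forall m, successful Delta h tau (z m)) /\
  (forall m, z m < z (S m)) /\
  (forall t, successful Delta h tau t -> exists m, z m = t).

Fixpoint alpha (nx nu : nat) (Ad Bd K : mat) (y : vec) (p : nat) : vec :=
  match p with
  | O => y
  | S p' => let a := alpha nx nu Ad Bd K y p' in
            vadd (mv nx Ad a) (mv nu Bd (mv nx K a))
  end.

(* ||w(s)|| with w = [d' n']' *)
Definition wnorm (nx : nat) (d nn : R -> vec) (s : R) : R :=
  sqrt (vnorm nx (d s) ^ 2 + vnorm nx (nn s) ^ 2).
Definition is_wsup (nx : nat) (d nn : R -> vec) (t W : R) : Prop :=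
  is_lub (fun r => exists s, 0 <= s <= t /\ r = wnorm nx d nn s) W.

(* The prediction alpha_p(z_m) is propagated with the exact discretisation of the nominal
   dynamics, so on each completed actuator period it follows a trajectory y of
   y' = A y + B K alpha_q, while the true state obeys x' = A x + B K alpha_q + d.  Since
   <v, A v> <= mu |v|^2 with mu = max mu_A 0, a Gronwall comparison gives
   |y(s) - x(s)| <= e^(mu (s - a)) |y(a) - x(a)| + sup |d| (e^(mu (s - a)) - 1) / mu.
   Starting from |alpha_0 - x(z_m)| = |n(z_m)|, induction over the completed periods bounds
   the error at z_m + p delta by a multiple of ||w_t||.  Within the current period the
   prediction is frozen, so the error drifts at rate at most |Phi alpha_p| + |d|, and
   |alpha_p| <= |phi| + |x|; the sampling condition on delta makes the resulting gain
   (e^(mu delta) - 1) / mu * |Phi| at most sigma / (1 + sigma), which lets the |phi| term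
   be absorbed and leaves sigma |x(t)|.  Caratheodory solutions are handled through the
   fact that an absolutely continuous function with a.e. nonpositive derivative decreases,
   proved with Cousin's lemma. *)

From Coquelicot Require Import Coquelicot.
From Stdlib Require Import Reals Lra Lia Psatz FunctionalExtensionality List Classical ClassicalEpsilon Factorial.
Open Scope R_scope.
Import ListNotations.

(** * Finite sums, the Euclidean norm and the spectral norm *)

Lemma fsum_ext k f g : (forall i, (i < k)%nat -> f i = g i) -> fsum k f = fsum k g.
Proof.
  induction k; simpl; intros H; auto.
  rewrite IHk by (intros; apply H; lia). rewrite H by lia; auto.
Qed.

Lemma fsum_plus k f g : fsum k (fun i => f i + g i) = fsum k f + fsum k g.
Proof. induction k; simpl; [lra | rewrite IHk; lra]. Qed.

Lemma fsum_minus k f g : fsum k (fun i => f i - g i) = fsum k f - fsum k g.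
Proof. induction k; simpl; [lra | rewrite IHk; lra]. Qed.

Lemma fsum_scal k c f : fsum k (fun i => c * f i) = c * fsum k f.
Proof. induction k; simpl; [lra | rewrite IHk; lra]. Qed.

Lemma fsum_mulr k f c : fsum k f * c = fsum k (fun j => f j * c).
Proof. rewrite Rmult_comm, <- fsum_scal. apply fsum_ext; intros; ring. Qed.

Lemma fsum_zero k : fsum k (fun _ => 0) = 0.
Proof. induction k; simpl; [lra | rewrite IHk; lra]. Qed.

Lemma fsum_le k f g : (forall i, (i < k)%nat -> f i <= g i) -> fsum k f <= fsum k g.
Proof.
  induction k; simpl; intros H; [lra |].
  assert (fsum k f <= fsum k g) by (apply IHk; intros; apply H; lia).
  specialize (H k ltac:(lia)). lra.
Qed.

Lemma fsum_nonneg k f : (forall i, (i < k)%nat -> 0 <= f i) -> 0 <= fsum k f.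
Proof. intros H. rewrite <- (fsum_zero k). apply fsum_le; auto. Qed.

Lemma fsum_swap a b (f : nat -> nat -> R) :
  fsum a (fun i => fsum b (fun j => f i j)) = fsum b (fun j => fsum a (fun i => f i j)).
Proof. induction a; simpl. { rewrite fsum_zero; auto. } rewrite IHa, <- fsum_plus. auto. Qed.

Lemma fsum_abs k f : Rabs (fsum k f) <= fsum k (fun i => Rabs (f i)).
Proof.
  induction k; simpl. { rewrite Rabs_R0; lra. }
  eapply Rle_trans; [apply Rabs_triang | lra].
Qed.

Lemma fsum_le_term k f i : (forall j, (j < k)%nat -> 0 <= f j) -> (i < k)%nat -> f i <= fsum k f.
Proof.
  induction k; simpl; intros H Hi; [lia |].
  assert (0 <= fsum k f) by (apply fsum_nonneg; intros; apply H; lia).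
  destruct (Nat.eq_dec i k) as [-> | Hik]; [lra |].
  assert (f i <= fsum k f) by (apply IHk; [intros; apply H |]; lia).
  specialize (H k ltac:(lia)). lra.
Qed.

Lemma fsum_shift k f : fsum (S k) f = f O + fsum k (fun p => f (S p)).
Proof. induction k; simpl in *; [lra | rewrite IHk; lra]. Qed.

Lemma fsum_delta k i (f : nat -> R) :
  (i < k)%nat -> fsum k (fun j => (if Nat.eqb i j then 1 else 0) * f j) = f i.
Proof.
  induction k; intros Hi; [lia |]. simpl. destruct (Nat.eqb_spec i k) as [-> | Hik].
  - rewrite (fsum_ext k _ (fun _ => 0)), fsum_zero; [ring |].
    intros j Hj. destruct (Nat.eqb_spec k j); [lia | ring].
  - rewrite IHk by lia. ring.
Qed.

Definition dot k (u v : vec) := fsum k (fun i => u i * v i).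

Lemma dot_self_nonneg k v : 0 <= dot k v v.
Proof. apply fsum_nonneg; intros; nra. Qed.

Lemma vnorm_dot k v : vnorm k v = sqrt (dot k v v).
Proof. unfold vnorm, dot. f_equal. apply fsum_ext; intros; ring. Qed.

Lemma vnorm_nonneg k v : 0 <= vnorm k v.
Proof. apply sqrt_pos. Qed.

Lemma vnorm_sq k v : vnorm k v * vnorm k v = dot k v v.
Proof. rewrite vnorm_dot. apply sqrt_sqrt, dot_self_nonneg. Qed.

Lemma vnorm_ext k u v : (forall i, (i < k)%nat -> u i = v i) -> vnorm k u = vnorm k v.
Proof. intros H; unfold vnorm; f_equal; apply fsum_ext; intros; rewrite H; auto. Qed.

Lemma vnorm_le_of_dot k u c : 0 <= c -> dot k u u <= c * c -> vnorm k u <= c.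
Proof. intros Hc H. rewrite vnorm_dot, <- (sqrt_square c) by auto. apply sqrt_le_1_alt. lra. Qed.

Lemma dot_expand k w g e :
  dot k (fun i => w i + e * g i) (fun i => w i + e * g i)
  = dot k w w + 2 * e * dot k w g + e * e * dot k g g.
Proof. unfold dot. rewrite <- !fsum_scal, <- !fsum_plus. apply fsum_ext; intros; ring. Qed.

Lemma dot_scal k c v : dot k (fun i => c * v i) (fun i => c * v i) = c * c * dot k v v.
Proof. unfold dot. rewrite <- fsum_scal. apply fsum_ext; intros; ring. Qed.

Lemma cauchy_schwarz_sq k u v : dot k u v * dot k u v <= dot k u u * dot k v v.
Proof.
  (* the discriminant of the nonnegative quadratic t |-> |u + t v|^2 *)
  assert (H : forall t, 0 <= dot k u u + 2 * t * dot k u v + t * t * dot k v v).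
  { intro t. rewrite <- dot_expand. apply dot_self_nonneg. }
  pose proof (dot_self_nonneg k v). pose proof (dot_self_nonneg k u).
  destruct (Req_dec (dot k v v) 0) as [E | E].
  - destruct (Req_dec (dot k u v) 0) as [E2 | E2]; [rewrite E2, E; lra | exfalso].
    specialize (H (- (dot k u u + 1) / (2 * dot k u v))). rewrite E in H.
    assert (2 * (- (dot k u u + 1) / (2 * dot k u v)) * dot k u v = - (dot k u u + 1))
      by (field; auto).
    lra.
  - set (t := - dot k u v / dot k v v). specialize (H t).
    assert (t * dot k v v = - dot k u v) by (unfold t; field; auto).
    assert (0 <= dot k v v * (dot k u u + 2 * t * dot k u v + t * t * dot k v v))
      by (apply Rmult_le_pos; lra).
    nra.
Qed.

Lemma cauchy_schwarz k u v : dot k u v <= vnorm k u * vnorm k v.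
Proof.
  pose proof (cauchy_schwarz_sq k u v) as H. rewrite <- (vnorm_sq k u), <- (vnorm_sq k v) in H.
  pose proof (vnorm_nonneg k u). pose proof (vnorm_nonneg k v).
  destruct (Rle_dec (dot k u v) (vnorm k u * vnorm k v)) as [| Hn]; auto.
  assert (0 <= vnorm k u * vnorm k v) by (apply Rmult_le_pos; auto). nra.
Qed.

Lemma vnorm_triang k u v : vnorm k (vadd u v) <= vnorm k u + vnorm k v.
Proof.
  pose proof (vnorm_nonneg k u); pose proof (vnorm_nonneg k v).
  apply vnorm_le_of_dot; [lra |].
  replace (vadd u v) with (fun i => u i + 1 * v i)
    by (apply functional_extensionality; intros; unfold vadd; ring).
  rewrite dot_expand, <- (vnorm_sq k u), <- (vnorm_sq k v).
  pose proof (cauchy_schwarz k u v). nra.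
Qed.

Lemma vnorm_scal k c v : vnorm k (fun i => c * v i) = Rabs c * vnorm k v.
Proof.
  rewrite !vnorm_dot, dot_scal, sqrt_mult, <- sqrt_Rsqr_abs; auto.
  - nra.
  - apply dot_self_nonneg.
Qed.

Lemma vnorm_opp k v : vnorm k (fun i => - v i) = vnorm k v.
Proof.
  rewrite <- (Rmult_1_l (vnorm k v)), <- Rabs_R1, <- Rabs_Ropp, <- vnorm_scal.
  apply vnorm_ext; intros; ring.
Qed.

Lemma Rabs_le_vnorm k v i : (i < k)%nat -> Rabs (v i) <= vnorm k v.
Proof.
  intros Hi. rewrite vnorm_dot, <- sqrt_Rsqr_abs. apply sqrt_le_1_alt.
  apply (fsum_le_term k (fun i => v i * v i)); auto. intros; nra.
Qed.

Lemma vnorm_eq0_coord k v : vnorm k v = 0 -> forall i, (i < k)%nat -> v i = 0.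
Proof.
  intros H i Hi. pose proof (Rabs_le_vnorm k v i Hi). rewrite H in *.
  destruct (Req_dec (v i) 0); auto. pose proof (Rabs_pos_lt _ H1). lra.
Qed.

Lemma vnorm_eq0 k v : (forall i, (i < k)%nat -> v i = 0) -> vnorm k v = 0.
Proof.
  intros H. rewrite vnorm_dot. unfold dot.
  rewrite (fsum_ext k _ (fun _ => 0)), fsum_zero; [apply sqrt_0 |].
  intros i Hi. rewrite H; auto; ring.
Qed.

Lemma dot_eq0_coord k v : dot k v v = 0 -> forall i, (i < k)%nat -> v i = 0.
Proof. intros H. apply vnorm_eq0_coord. rewrite vnorm_dot, H. apply sqrt_0. Qed.

Lemma mv_ext k M u v i : (forall j, (j < k)%nat -> u j = v j) -> mv k M u i = mv k M v i.
Proof. intros H; unfold mv; apply fsum_ext; intros; rewrite H; auto. Qed.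

Lemma mv_madd k M N v i : mv k (madd M N) v i = mv k M v i + mv k N v i.
Proof. unfold mv, madd. rewrite <- fsum_plus. apply fsum_ext; intros; ring. Qed.

Lemma mv_scal k M c v i : mv k M (fun j => c * v j) i = c * mv k M v i.
Proof. unfold mv; rewrite <- fsum_scal; apply fsum_ext; intros; ring. Qed.

Lemma mv_vsub k M u v i : mv k M (vsub u v) i = mv k M u i - mv k M v i.
Proof. unfold mv, vsub; rewrite <- fsum_minus; apply fsum_ext; intros; ring. Qed.

Lemma mv_zero c M v i : (forall j, (j < c)%nat -> v j = 0) -> mv c M v i = 0.
Proof.
  intros H. unfold mv. rewrite (fsum_ext c _ (fun _ => 0)), fsum_zero; auto.
  intros; rewrite H; auto; ring.
Qed.

Lemma mv_mm k l M N v i : mv k (mm l M N) v i = mv l M (mv k N v) i.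
Proof.
  unfold mv, mm.
  transitivity (fsum k (fun j => fsum l (fun x => M i x * N x j * v j))).
  - apply fsum_ext; intros. rewrite Rmult_comm, <- fsum_scal. apply fsum_ext; intros; ring.
  - rewrite fsum_swap. apply fsum_ext; intros. rewrite <- fsum_scal. apply fsum_ext; intros; ring.
Qed.

Lemma spec_norm_nonneg r c M nrm : is_spec_norm r c M nrm -> 0 <= nrm.
Proof.
  intros [Hub _]. apply Hub. exists (fun _ => 0). split.
  - rewrite vnorm_eq0; auto; lra.
  - symmetry; apply vnorm_eq0; intros; apply mv_zero; auto.
Qed.

Lemma spec_norm_bound r c M nrm v :
  is_spec_norm r c M nrm -> vnorm r (mv c M v) <= nrm * vnorm c v.
Proof.
  intros Hn. pose proof (spec_norm_nonneg _ _ _ _ Hn). destruct Hn as [Hub _].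
  pose proof (vnorm_nonneg c v). set (s := vnorm c v) in *.
  destruct (Req_dec s 0) as [E | E].
  - rewrite E, Rmult_0_r, vnorm_eq0; [lra |].
    intros; apply mv_zero. apply vnorm_eq0_coord; auto.
  - assert (Hs : 0 < / s) by (apply Rinv_0_lt_compat; lra).
    (* apply the defining supremum to the unit vector v / |v| *)
    assert (H1 : vnorm r (mv c M (fun j => / s * v j)) <= nrm).
    { apply Hub. exists (fun j => / s * v j). split; auto.
      rewrite vnorm_scal, Rabs_right by lra. fold s. right; field; auto. }
    rewrite (vnorm_ext r _ (fun i => / s * mv c M v i)), vnorm_scal, Rabs_right in H1
      by (try lra; intros; apply mv_scal).
    apply Rmult_le_compat_l with (r := s) in H1; [| lra].
    rewrite <- Rmult_assoc, Rinv_r, Rmult_1_l in H1 by auto. lra.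
Qed.

(** * Absolute continuity *)

Lemma abs_cont_restrict f a b a' b' :
  a <= a' -> b' <= b -> abs_cont_on f a b -> abs_cont_on f a' b'.
Proof.
  intros H1 H2 H eps He. destruct (H eps He) as [eta [Heta Hf]]. exists eta; split; auto.
  intros K l r Hlr Hs Hsum. apply Hf; auto. intros p Hp; destruct (Hlr p Hp); lra.
Qed.

Lemma abs_cont_ext f g a b :
  (forall t, a <= t <= b -> f t = g t) -> abs_cont_on f a b -> abs_cont_on g a b.
Proof.
  intros E H eps He. destruct (H eps He) as [eta [Heta Hf]]. exists eta; split; auto.
  intros K l r Hlr Hs Hsum. erewrite fsum_ext; [apply (Hf K l r Hlr Hs Hsum) |].
  intros p Hp. destruct (Hlr p Hp) as [? []]. rewrite !E by lra. auto.
Qed.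

Lemma abs_cont_of_lipschitz f a b L : 0 <= L ->
  (forall l r, a <= l -> l <= r -> r <= b -> Rabs (f r - f l) <= L * (r - l)) ->
  abs_cont_on f a b.
Proof.
  intros HL H eps He. exists (eps / (L + 1)). split; [apply Rdiv_lt_0_compat; lra |].
  intros K l r Hlr Hs Hsum.
  apply Rle_lt_trans with (fsum K (fun p => L * (r p - l p))).
  { apply fsum_le; intros p Hp; destruct (Hlr p Hp) as [? []]; apply H; lra. }
  rewrite fsum_scal.
  assert (0 <= fsum K (fun p => r p - l p))
    by (apply fsum_nonneg; intros p Hp; destruct (Hlr p Hp); lra).
  apply Rmult_lt_compat_l with (r := L + 1) in Hsum; [| lra].
  replace ((L + 1) * (eps / (L + 1))) with eps in Hsum by (field; lra). nra.
Qed.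

Lemma abs_cont_of_deriv_bounded f f' a b L : 0 <= L ->
  (forall t, a <= t <= b -> derivable_pt_lim f t (f' t)) ->
  (forall t, a <= t <= b -> Rabs (f' t) <= L) -> abs_cont_on f a b.
Proof.
  intros HL Hd Hb. apply abs_cont_of_lipschitz with L; auto. intros l r H1 H2 H3.
  destruct (MVT_abs f f' l r) as [c [Hc1 Hc2]].
  { intros c Hc. rewrite Rmin_left, Rmax_right in Hc by lra. apply Hd; lra. }
  rewrite Rmin_left, Rmax_right in Hc2 by lra. rewrite Hc1, (Rabs_right (r - l)) by lra.
  apply Rmult_le_compat_r; [lra | apply Hb; lra].
Qed.

Lemma abs_cont_const c a b : abs_cont_on (fun _ => c) a b.
Proof.
  apply abs_cont_of_lipschitz with 0; [lra |]. intros.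
  replace (c - c) with 0 by ring. rewrite Rabs_R0; lra.
Qed.

Lemma abs_cont_dominated h f g c1 c2 a b : 0 <= c1 -> 0 <= c2 ->
  abs_cont_on f a b -> abs_cont_on g a b ->
  (forall l r, a <= l -> l <= r -> r <= b ->
     Rabs (h r - h l) <= c1 * Rabs (f r - f l) + c2 * Rabs (g r - g l)) ->
  abs_cont_on h a b.
Proof.
  intros Hc1 Hc2 Hf Hg Hd eps He.
  destruct (Hf (eps / (2 * (c1 + 1)))) as [e1 [He1 H1]]; [apply Rdiv_lt_0_compat; lra |].
  destruct (Hg (eps / (2 * (c2 + 1)))) as [e2 [He2 H2]]; [apply Rdiv_lt_0_compat; lra |].
  exists (Rmin e1 e2). split; [apply Rmin_glb_lt; auto |].
  intros K l r Hlr Hs Hsum.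
  set (Sf := fsum K (fun p => Rabs (f (r p) - f (l p)))).
  set (Sg := fsum K (fun p => Rabs (g (r p) - g (l p)))).
  assert (S1 : Sf < eps / (2 * (c1 + 1)))
    by (apply H1; auto; pose proof (Rmin_l e1 e2); lra).
  assert (S2 : Sg < eps / (2 * (c2 + 1)))
    by (apply H2; auto; pose proof (Rmin_r e1 e2); lra).
  apply Rle_lt_trans with (c1 * Sf + c2 * Sg).
  { unfold Sf, Sg. rewrite <- !fsum_scal, <- fsum_plus.
    apply fsum_le; intros p Hp. destruct (Hlr p Hp) as [? []]. apply Hd; auto. }
  assert (0 <= Sf) by (apply fsum_nonneg; intros; apply Rabs_pos).
  assert (0 <= Sg) by (apply fsum_nonneg; intros; apply Rabs_pos).
  apply Rmult_lt_compat_l with (r := c1 + 1) in S1; [| lra].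
  apply Rmult_lt_compat_l with (r := c2 + 1) in S2; [| lra].
  replace ((c1 + 1) * (eps / (2 * (c1 + 1)))) with (eps / 2) in S1 by (field; lra).
  replace ((c2 + 1) * (eps / (2 * (c2 + 1)))) with (eps / 2) in S2 by (field; lra).
  nra.
Qed.

Lemma abs_cont_lin f g c1 c2 a b : abs_cont_on f a b -> abs_cont_on g a b ->
  abs_cont_on (fun t => c1 * f t + c2 * g t) a b.
Proof.
  intros Hf Hg. apply abs_cont_dominated with f g (Rabs c1) (Rabs c2); try apply Rabs_pos; auto.
  intros l r _ _ _. rewrite <- !Rabs_mult.
  replace (c1 * f r + c2 * g r - (c1 * f l + c2 * g l))
    with (c1 * (f r - f l) + c2 * (g r - g l)) by ring.
  apply Rabs_triang.
Qed.

Lemma abs_cont_minus f g a b : abs_cont_on f a b -> abs_cont_on g a b ->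
  abs_cont_on (fun t => f t - g t) a b.
Proof.
  intros. apply abs_cont_ext with (fun t => 1 * f t + (-1) * g t); [intros; ring |].
  apply abs_cont_lin; auto.
Qed.

Lemma abs_cont_scal f c a b : abs_cont_on f a b -> abs_cont_on (fun t => c * f t) a b.
Proof.
  intros. apply abs_cont_ext with (fun t => c * f t + 0 * f t); [intros; ring |].
  apply abs_cont_lin; auto.
Qed.

Lemma abs_cont_fsum n (F : nat -> R -> R) a b :
  (forall i, (i < n)%nat -> abs_cont_on (F i) a b) ->
  abs_cont_on (fun t => fsum n (fun i => F i t)) a b.
Proof.
  induction n; intros H; simpl; [apply abs_cont_const |].
  apply abs_cont_ext with (fun t => 1 * fsum n (fun i => F i t) + 1 * F n t);
    [intros; ring |].
  apply abs_cont_lin; [apply IHn; intros |]; apply H; lia.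
Qed.

Lemma abs_cont_bounded f a b : abs_cont_on f a b -> a <= b ->
  exists M, forall t, a <= t <= b -> Rabs (f t) <= M.
Proof.
  intros H Hab. destruct (H 1 ltac:(lra)) as [eta [Heta Hf]].
  assert (Hstep : forall s t, a <= s -> s <= t -> t <= b -> t - s < eta ->
                  Rabs (f t - f s) < 1).
  { intros s t H1 H2 H3 H4.
    specialize (Hf 1%nat (fun _ => s) (fun _ => t)). simpl in Hf.
    assert (0 + Rabs (f t - f s) < 1) by (apply Hf; intros; lra || lia). lra. }
  assert (Hn : forall n : nat, forall t, a <= t <= b -> t <= a + INR n * (eta / 2) ->
               Rabs (f t - f a) <= INR n).
  { induction n; intros t Ht Htn.
    - simpl in Htn. replace t with a by lra.
      replace (f a - f a) with 0 by ring. rewrite Rabs_R0; simpl; lra.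
    - rewrite S_INR in *. destruct (Rle_dec t (a + INR n * (eta / 2))) as [Hle | Hgt].
      + specialize (IHn t Ht Hle). lra.
      + set (t' := a + INR n * (eta / 2)). pose proof (pos_INR n).
        assert (a <= t') by (unfold t'; nra).
        specialize (IHn t' ltac:(unfold t' in *; lra) (Rle_refl _)).
        assert (Rabs (f t - f t') < 1) by (apply Hstep; unfold t' in *; lra).
        replace (f t - f a) with ((f t - f t') + (f t' - f a)) by ring.
        eapply Rle_trans; [apply Rabs_triang | lra]. }
  destruct (archimed ((b - a) / (eta / 2))) as [Hup _].
  assert (Hq : 0 <= (b - a) / (eta / 2)) by (apply Rdiv_le_0_compat; lra).
  assert (0 <= up ((b - a) / (eta / 2)))%Z by (apply le_IZR; lra).
  destruct (IZN _ H0) as [n En]. rewrite En, <- INR_IZR_INZ in Hup.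
  exists (Rabs (f a) + INR n). intros t Ht.
  assert (Rabs (f t - f a) <= INR n).
  { apply Hn; auto.
    apply Rmult_lt_compat_r with (r := eta / 2) in Hup; [| lra].
    replace ((b - a) / (eta / 2) * (eta / 2)) with (b - a) in Hup by (field; lra). lra. }
  replace (f t) with ((f t - f a) + f a) by ring. eapply Rle_trans; [apply Rabs_triang | lra].
Qed.

Lemma abs_cont_mult f g a b : a <= b -> abs_cont_on f a b -> abs_cont_on g a b ->
  abs_cont_on (fun t => f t * g t) a b.
Proof.
  intros Hab Hf Hg.
  destruct (abs_cont_bounded f a b Hf Hab) as [Mf HMf].
  destruct (abs_cont_bounded g a b Hg Hab) as [Mg HMg].
  assert (0 <= Mf) by (specialize (HMf a ltac:(lra)); pose proof (Rabs_pos (f a)); lra).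
  assert (0 <= Mg) by (specialize (HMg a ltac:(lra)); pose proof (Rabs_pos (g a)); lra).
  apply abs_cont_dominated with f g Mg Mf; auto. intros l r H1 H2 H3.
  replace (f r * g r - f l * g l) with (f r * (g r - g l) + g l * (f r - f l)) by ring.
  eapply Rle_trans; [apply Rabs_triang |]. rewrite !Rabs_mult.
  specialize (HMf r ltac:(lra)). specialize (HMg l ltac:(lra)).
  pose proof (Rabs_pos (g r - g l)). pose proof (Rabs_pos (f r - f l)). nra.
Qed.

Lemma abs_cont_comp_lipschitz (phi : R -> R) f a b L : 0 <= L -> abs_cont_on f a b ->
  (forall t, a <= t <= b -> 0 <= f t) ->
  (forall x y, 0 <= x -> 0 <= y -> Rabs (phi x - phi y) <= L * Rabs (x - y)) ->
  abs_cont_on (fun t => phi (f t)) a b.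
Proof.
  intros HL Hf Hpos Hphi. apply abs_cont_dominated with f f L 0; auto; try lra.
  intros l r H1 H2 H3. rewrite Rmult_0_l, Rplus_0_r. apply Hphi; apply Hpos; lra.
Qed.

(** * Absolutely continuous functions with a.e. nonpositive derivative decrease *)

Fixpoint tagged_partition (P : R -> R -> R -> Prop) (s e : R) (L : list (R * R * R)) : Prop :=
  match L with
  | nil => s = e
  | (l, t, r) :: L' => l = s /\ l <= t /\ t <= r /\ P l t r /\ tagged_partition P r e L'
  end.

Lemma tagged_partition_app P a s e L1 L2 :
  tagged_partition P a s L1 -> tagged_partition P s e L2 -> tagged_partition P a e (L1 ++ L2).
Proof.
  revert a. induction L1 as [| [[l t] r] L1 IH]; simpl; intros a H1 H2; [subst; auto |].
  destruct H1 as [? [? [? [? ?]]]]. repeat split; auto.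
Qed.

Lemma tagged_partition_le P s e L : tagged_partition P s e L -> s <= e.
Proof.
  revert s. induction L as [| [[l t] r] L IH]; simpl; intros s H; [lra |].
  destruct H as [? [? [? [? H]]]]. apply IH in H. lra.
Qed.

Lemma cousin (P : R -> R -> R -> Prop) a b : a <= b ->
  (forall t, a <= t <= b -> exists rho, rho > 0 /\
     forall l r, l <= t -> t <= r -> t - rho < l -> r < t + rho -> P l t r) ->
  exists L, tagged_partition P a b L.
Proof.
  intros Hab HP.
  set (E := fun s => a <= s <= b /\ exists L, tagged_partition P a s L).
  assert (HE : exists x, E x) by (exists a; split; [lra | exists nil; simpl; auto]).
  assert (Hb : bound E) by (exists b; intros x [Hx _]; lra).
  destruct (completeness E Hb HE) as [c [Hub Hlub]].
  assert (Hac : a <= c) by (apply Hub; split; [lra | exists nil; simpl; auto]).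
  assert (Hcb : c <= b) by (apply Hlub; intros x [Hx _]; lra).
  destruct (HP c ltac:(lra)) as [rho [Hrho Hc]].
  assert (Hs : exists s, E s /\ c - rho < s).
  { apply NNPP. intros Hn. assert (c <= c - rho); [| lra]. apply Hlub. intros x Hx.
    destruct (Rle_dec x (c - rho)); auto. exfalso; apply Hn; exists x; split; auto; lra. }
  destruct Hs as [s [[Hs1 [L HL]] Hs2]].
  assert (Hsc : s <= c) by (apply Hub; split; auto; exists L; auto).
  set (c' := Rmin b (c + rho / 2)).
  assert (Hc'b : c' <= b) by apply Rmin_l.
  assert (Hc'c : c' <= c + rho / 2) by apply Rmin_r.
  assert (Hcc' : c <= c') by (apply Rmin_glb; lra).
  (* one more piece tagged at the supremum reaches past it, unless it reaches b *)
  assert (HEc' : E c').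
  { split; [lra |]. exists (L ++ [(s, c, c')]). apply tagged_partition_app with s; auto.
    simpl. repeat split; auto; try lra. apply Hc; lra. }
  assert (c' <= c) by (apply Hub; auto).
  assert (c' = b).
  { unfold c' in *. destruct (Rle_dec b (c + rho / 2)).
    - rewrite Rmin_left in *; auto.
    - rewrite Rmin_right in *; lra. }
  rewrite <- H0. destruct HEc' as [_ [L' HL']]. exists L'; auto.
Qed.

(* Lists of intervals (l, r, p), each inside the p-th interval of a given cover. *)
Notation ivl := (R * R * nat)%type (only parsing).
Definition ivl_left (q : ivl) : R := fst (fst q).
Definition ivl_right (q : ivl) : R := snd (fst q).
Definition ivl_len (q : ivl) : R := ivl_right q - ivl_left q.

Fixpoint ivl_sorted (B : list ivl) : Prop :=
  match B with
  | nil => True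
  | (l, r, p) :: B' => l <= r /\ Forall (fun q => r <= ivl_left q) B' /\ ivl_sorted B'
  end.

Fixpoint lsum (g : ivl -> R) (B : list ivl) : R :=
  match B with nil => 0 | q :: B' => g q + lsum g B' end.

Lemma lsum_le g h B : Forall (fun q => g q <= h q) B -> lsum g B <= lsum h B.
Proof. induction B; simpl; intros H; [lra |]. inversion H; subst. apply IHB in H3. lra. Qed.

Lemma lsum_filter g f B :
  lsum g B = lsum g (filter f B) + lsum g (filter (fun x => negb (f x)) B).
Proof. induction B; simpl; [lra |]. destruct (f a); simpl; lra. Qed.

Lemma fsum_lsum g B d : fsum (length B) (fun p => g (nth p B d)) = lsum g B.
Proof.
  induction B; [reflexivity |]. change (length (a :: B)) with (S (length B)).
  rewrite fsum_shift. simpl nth. rewrite IHB. reflexivity.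
Qed.

Lemma ivl_sorted_filter f B : ivl_sorted B -> ivl_sorted (filter f B).
Proof.
  induction B as [| [[l r] p] B IH]; simpl; auto. intros [H1 [H2 H3]].
  destruct (f (l, r, p)); simpl; auto. repeat split; auto.
  exact (incl_Forall (incl_filter _ _) H2).
Qed.

Lemma ivl_sorted_nth B d p : ivl_sorted B -> (S p < length B)%nat ->
  ivl_right (nth p B d) <= ivl_left (nth (S p) B d).
Proof.
  revert p. induction B as [| [[l r] q] B IH]; simpl; intros p Hs Hp; [lia |].
  destruct Hs as [_ [HF Hs]]. destruct p.
  - destruct B; [simpl in Hp; lia |]. simpl. inversion HF; auto.
  - apply IH; auto. lia.
Qed.

Lemma ivl_sorted_len_le B lo hi : ivl_sorted B -> lo <= hi ->
  Forall (fun q => lo <= ivl_left q /\ ivl_right q <= hi) B -> lsum ivl_len B <= hi - lo.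
Proof.
  revert lo. induction B as [| [[l r] p] B IH]; simpl; intros lo Hs Hlh HF; [lra |].
  destruct Hs as [Hlr [HF2 Hs]]. inversion HF; subst. destruct H1 as [H1 H1'].
  assert (lsum ivl_len B <= hi - r).
  { apply IH; [auto | unfold ivl_right in H1'; simpl in H1'; lra |].
    rewrite Forall_forall in *. intros x Hx. split; [apply HF2 | apply H2]; auto. }
  unfold ivl_len, ivl_left, ivl_right in *; simpl in *. lra.
Qed.

(* Group the pieces by the index of their covering interval. *)
Lemma ivl_len_le_cover (al be : nat -> R) Kmax B : ivl_sorted B -> (forall p, al p <= be p) ->
  Forall (fun q => (snd q < Kmax)%nat /\ al (snd q) < ivl_left q /\ ivl_right q < be (snd q)) B ->
  lsum ivl_len B <= fsum Kmax (fun p => be p - al p).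
Proof.
  revert B. induction Kmax; intros B Hs Hab HF.
  - destruct B; [simpl; lra |]. inversion HF; lia.
  - simpl. rewrite (lsum_filter ivl_len (fun x => Nat.eqb (snd x) Kmax)).
    assert (lsum ivl_len (filter (fun x => negb (Nat.eqb (snd x) Kmax)) B)
            <= fsum Kmax (fun p => be p - al p)).
    { apply IHKmax; [apply ivl_sorted_filter; auto | auto |].
      rewrite Forall_forall in *. intros x Hx. apply filter_In in Hx. destruct Hx as [Hx1 Hx2].
      destruct (HF x Hx1) as [? ?]. split; auto.
      apply Bool.negb_true_iff, Nat.eqb_neq in Hx2. lia. }
    assert (lsum ivl_len (filter (fun x => Nat.eqb (snd x) Kmax) B) <= be Kmax - al Kmax).
    { apply ivl_sorted_len_le; [apply ivl_sorted_filter; auto | specialize (Hab Kmax); lra |].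
      rewrite Forall_forall in *. intros x Hx. apply filter_In in Hx. destruct Hx as [Hx1 Hx2].
      apply Nat.eqb_eq in Hx2. destruct (HF x Hx1) as [? [? ?]]. rewrite Hx2 in *. lra. }
    lra.
Qed.

Definition ivl_max_index (B : list ivl) : nat := fold_right (fun x m => Nat.max (snd x) m) O B.

Lemma ivl_max_index_ge B : Forall (fun q => (snd q <= ivl_max_index B)%nat) B.
Proof.
  induction B; simpl; constructor; [lia |].
  eapply Forall_impl; [| apply IHB]. intros; simpl in *; lia.
Qed.

Lemma partition_increase_split (F : R -> R) (eps : R) (al be : nat -> R) s e L : 0 <= eps ->
  tagged_partition (fun l t r => F r - F l <= eps * (r - l) \/ exists p, al p < l /\ r < be p) s e L ->
  exists B, ivl_sorted B /\
    Forall (fun q => s <= ivl_left q /\ ivl_left q <= ivl_right q /\ ivl_right q <= e /\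
                     al (snd q) < ivl_left q /\ ivl_right q < be (snd q)) B /\
    F e - F s <= eps * (e - s) + lsum (fun q => F (ivl_right q) - F (ivl_left q)) B.
Proof.
  unfold ivl_left, ivl_right. intros Heps. revert s.
  induction L as [| [[l t] r] L IH]; simpl; intros s H.
  - subst. exists nil. simpl. repeat split; auto. lra.
  - destruct H as [E [H1 [H2 [HP Hc]]]]. subst l.
    pose proof (tagged_partition_le _ _ _ _ Hc).
    destruct (IH r Hc) as [B [Hs [HF Hsum]]].
    destruct HP as [HP | [p [Hp1 Hp2]]].
    + exists B. repeat split; auto; [| nra].
      rewrite Forall_forall in *. intros x Hx.
      destruct (HF x Hx) as [? [? [? [? ?]]]]. repeat split; auto; lra.
    + exists ((s, r, p) :: B). simpl. repeat split; try lra; auto.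
      * rewrite Forall_forall in *. intros x Hx. apply HF; auto.
      * constructor; [simpl; repeat split; lra |].
        rewrite Forall_forall in *. intros x Hx.
        destruct (HF x Hx) as [? [? [? [? ?]]]]. repeat split; auto; lra.
      * nra.
Qed.

Lemma straddle_deriv_nonpos F t D eps : eps > 0 -> derivable_pt_lim F t D -> D <= 0 ->
  exists rho, rho > 0 /\ forall l r, l <= t -> t <= r -> t - rho < l -> r < t + rho ->
    F r - F l <= eps * (r - l).
Proof.
  intros He HD HD0. destruct (HD eps He) as [delta Hdelta].
  exists delta. split; [apply cond_pos |]. intros l r Hl Hr H1 H2.
  assert (F r - F t <= eps * (r - t)).
  { destruct (Req_dec r t) as [-> | E]; [lra |].
    specialize (Hdelta (r - t) ltac:(lra) ltac:(rewrite Rabs_right; lra)).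
    replace (t + (r - t)) with r in Hdelta by ring.
    apply Rabs_def2 in Hdelta. destruct Hdelta as [Hq _].
    assert ((F r - F t) / (r - t) < eps) by lra.
    apply Rmult_lt_compat_r with (r := r - t) in H; [| lra].
    replace ((F r - F t) / (r - t) * (r - t)) with (F r - F t) in H by (field; lra). lra. }
  assert (F t - F l <= eps * (t - l)).
  { destruct (Req_dec l t) as [-> | E]; [lra |].
    specialize (Hdelta (l - t) ltac:(lra) ltac:(rewrite Rabs_left; lra)).
    replace (t + (l - t)) with l in Hdelta by ring.
    apply Rabs_def2 in Hdelta. destruct Hdelta as [Hq _].
    assert ((F l - F t) / (l - t) < eps) by lra.
    apply Rmult_lt_compat_r with (r := t - l) in H0; [| lra].
    replace ((F l - F t) / (l - t) * (t - l)) with (F t - F l) in H0 by (field; lra). lra. }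
  lra.
Qed.

Lemma fine_partition_good_or_covered F a b N eps (al be : nat -> R) : a <= b -> eps > 0 ->
  (forall t, a <= t < b -> ~ N t -> exists D, derivable_pt_lim F t D /\ D <= 0) ->
  (forall t, a <= t <= b -> (t < b /\ ~ N t) \/ exists p, al p < t < be p) ->
  exists L, tagged_partition
    (fun l _ r => F r - F l <= eps * (r - l) \/ exists p, al p < l /\ r < be p) a b L.
Proof.
  intros Hab He Hd Hcov. apply cousin; auto. intros t Ht.
  destruct (Hcov t Ht) as [[Htb HNt] | [p Hp]].
  - destruct (Hd t ltac:(lra) HNt) as [D [HD HD0]].
    destruct (straddle_deriv_nonpos F t D eps He HD HD0) as [rho [Hrho Hs]].
    exists rho. split; [auto |]. intros l r H1 H2 H3 H4. left. apply Hs; auto.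
  - exists (Rmin (t - al p) (be p - t)). split; [apply Rmin_glb_lt; lra |].
    intros l r Hl Hr H1 H2. right. exists p.
    pose proof (Rmin_l (t - al p) (be p - t)).
    pose proof (Rmin_r (t - al p) (be p - t)). split; lra.
Qed.

Lemma increase_le_eps F a b N eps : a <= b -> eps > 0 -> abs_cont_on F a b -> null_set N ->
  (forall t, a <= t < b -> ~ N t -> exists D, derivable_pt_lim F t D /\ D <= 0) ->
  F b - F a <= eps * (b - a) + eps.
Proof.
  intros Hab He Hac HN Hd.
  destruct (Hac eps He) as [eta [Heta Hf]].
  destruct (HN (eta / 4) ltac:(lra)) as [al [be [Halbe [Hcov Hsum]]]].
  (* cover of N, extended by a small interval around the endpoint b *)
  set (al' := fun p => match p with O => b - eta / 8 | S q => al q end).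
  set (be' := fun p => match p with O => b + eta / 8 | S q => be q end).
  assert (Hch : exists L, tagged_partition
    (fun l _ r => F r - F l <= eps * (r - l) \/ exists p, al' p < l /\ r < be' p) a b L).
  { apply fine_partition_good_or_covered with N; auto. intros t Ht.
    destruct (classic (t < b /\ ~ N t)) as [| Hbad]; [left; auto | right].
    destruct (Req_dec t b) as [E | E]; [exists O; simpl; lra |].
    assert (N t) by (apply NNPP; intros HNt; apply Hbad; split; auto; lra).
    destruct (Hcov t H) as [p Hp]. exists (S p); simpl; auto. }
  destruct Hch as [L HL].
  destruct (partition_increase_split F eps al' be' a b L ltac:(lra) HL) as [B [Hs [HF HFB]]].
  assert (Hlen : lsum ivl_len B <= eta / 2).
  { apply Rle_trans with (fsum (S (ivl_max_index B)) (fun p => be' p - al' p)).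
    - apply ivl_len_le_cover; auto.
      + intros [| p]; simpl; [lra | apply Halbe].
      + pose proof (ivl_max_index_ge B). rewrite Forall_forall in *.
        intros x Hx. specialize (HF x Hx). specialize (H x Hx). split; [lia | tauto].
    - rewrite fsum_shift. simpl. specialize (Hsum (ivl_max_index B)). lra. }
  (* absolute continuity bounds the increase over the bad pieces *)
  set (d := (0, 0, O) : ivl).
  assert (Hbad : fsum (length B)
            (fun p => Rabs (F (ivl_right (nth p B d)) - F (ivl_left (nth p B d)))) < eps).
  { apply Hf.
    - intros p Hp. rewrite Forall_forall in HF.
      specialize (HF (nth p B d) (nth_In _ _ Hp)). lra.
    - intros p Hp. apply ivl_sorted_nth; auto.
    - change (fsum (length B) (fun p => ivl_len (nth p B d)) < eta).
      rewrite fsum_lsum. lra. }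
  rewrite (fsum_lsum (fun q => Rabs (F (ivl_right q) - F (ivl_left q)))) in Hbad.
  assert (lsum (fun q => F (ivl_right q) - F (ivl_left q)) B
          <= lsum (fun q => Rabs (F (ivl_right q) - F (ivl_left q))) B)
    by (apply lsum_le; rewrite Forall_forall; intros; apply Rle_abs).
  lra.
Qed.

Lemma abs_cont_nonincreasing F a b N : a <= b -> abs_cont_on F a b -> null_set N ->
  (forall t, a <= t < b -> ~ N t -> exists D, derivable_pt_lim F t D /\ D <= 0) ->
  F b <= F a.
Proof.
  intros Hab Hac HN Hd. destruct (Rle_dec (F b) (F a)) as [| Hn]; auto. exfalso.
  set (eps := (F b - F a) / (2 * (b - a + 1))).
  assert (He : eps > 0) by (unfold eps; apply Rdiv_lt_0_compat; lra).
  pose proof (increase_le_eps F a b N eps Hab He Hac HN Hd).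
  assert (eps * (b - a) + eps = (F b - F a) / 2) by (unfold eps; field; lra). lra.
Qed.

(** * The logarithmic norm bounds the quadratic form of A *)

Lemma cv_const c : Un_cv (fun _ => c) c.
Proof.
  intros e He. exists O. intros. replace (c - c) with 0 by ring. rewrite R_dist_eq. lra.
Qed.

Lemma cv_ge u l c : Un_cv u l -> (forall n, c <= u n) -> c <= l.
Proof.
  intros H Hc. destruct (Rle_dec c l); auto. exfalso.
  destruct (H (c - l) ltac:(lra)) as [N HN].
  specialize (HN N (le_n _)). specialize (Hc N). unfold R_dist in HN.
  apply Rabs_def2 in HN. lra.
Qed.

Lemma strict_mono_ge (phi : nat -> nat) : (forall n, (phi n < phi (S n))%nat) ->
  forall n, (n <= phi n)%nat.
Proof. intros Hphi. induction n; [lia | specialize (Hphi n); lia]. Qed.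

Lemma cv_subseq u l phi : (forall n, (phi n < phi (S n))%nat) -> Un_cv u l ->
  Un_cv (fun n => u (phi n)) l.
Proof.
  intros Hphi H e He. destruct (H e He) as [N HN]. exists N. intros n Hn. apply HN.
  pose proof (strict_mono_ge phi Hphi n). lia.
Qed.

Lemma cv_fsum m (F : nat -> nat -> R) (L : nat -> R) :
  (forall j, (j < m)%nat -> Un_cv (fun n => F n j) (L j)) ->
  Un_cv (fun n => fsum m (F n)) (fsum m L).
Proof.
  induction m; intros H; simpl; [apply cv_const |].
  apply CV_plus; [apply IHm; intros |]; apply H; lia.
Qed.

Lemma bolzano_weierstrass_1 (u : nat -> R) : (forall n, -1 <= u n <= 1) ->
  exists phi l, (forall n, (phi n < phi (S n))%nat) /\ Un_cv (fun n => u (phi n)) l.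
Proof.
  intros Hu. destruct (Bolzano_Weierstrass u _ (compact_P3 (-1) 1) Hu) as [l Hl].
  (* l is an accumulation point; pick indices by recursion, each past the previous one *)
  assert (H : forall N m : nat, {p | (N <= p)%nat /\ Rabs (u p - l) < / INR (S m)}).
  { intros N m. apply constructive_indefinite_description.
    assert (Hpos : 0 < / INR (S m)) by (apply Rinv_0_lt_compat, lt_0_INR; lia).
    destruct (Hl (disc l (mkposreal _ Hpos)) N) as [p [Hp1 Hp2]].
    - exists (mkposreal _ Hpos). intros y Hy; auto.
    - exists p; split; auto. }
  set (phi := fix f n := match n with
                         | O => proj1_sig (H O O)
                         | S n' => proj1_sig (H (S (f n')) (S n')) end).
  exists phi, l. split.
  - intros n. simpl. destruct (H (S (phi n)) (S n)) as [p [Hp1 Hp2]]. simpl. lia.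
  - intros e He. destruct (archimed (/ e)) as [Hup _].
    assert (Hz : (0 <= up (/ e))%Z) by (apply le_IZR; pose proof (Rinv_0_lt_compat e He); lra).
    destruct (IZN _ Hz) as [N EN]. rewrite EN, <- INR_IZR_INZ in Hup.
    exists N. intros n Hn. unfold R_dist.
    assert (Hb : Rabs (u (phi n) - l) < / INR (S n)).
    { destruct n; simpl.
      - destruct (H O O) as [p [Hp0 Hp]]; simpl; auto.
      - destruct (H (S (phi n)) (S n)) as [p [Hp0 Hp]]; simpl; auto. }
    eapply Rlt_le_trans; [apply Hb |].
    assert (INR N < INR (S n)) by (apply lt_INR; lia).
    rewrite <- (Rinv_inv e). apply Rinv_le_contravar; [apply Rinv_0_lt_compat |]; lra.
Qed.

Lemma bolzano_weierstrass (v : nat -> vec) m : (forall n j, (j < m)%nat -> -1 <= v n j <= 1) ->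
  exists phi (w : vec), (forall n, (phi n < phi (S n))%nat) /\
    forall j, (j < m)%nat -> Un_cv (fun n => v (phi n) j) (w j).
Proof.
  induction m; intros Hv.
  - exists (fun n => n), (fun _ => 0). split; intros; lia.
  - destruct IHm as [phi [w [Hphi Hw]]]; [intros; apply Hv; lia |].
    destruct (bolzano_weierstrass_1 (fun n => v (phi n) m)) as [psi [l [Hpsi Hl]]];
      [intros; apply Hv; lia |].
    exists (fun n => phi (psi n)), (fun j => if Nat.eqb j m then l else w j). split.
    + intros n. assert (Hmono : forall a b, (a < b)%nat -> (phi a < phi b)%nat).
      { intros a b Hab. induction Hab; [apply Hphi | specialize (Hphi m0); lia]. }
      apply Hmono, Hpsi.
    + intros j Hj. destruct (Nat.eqb_spec j m) as [-> | Hjm]; auto.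
      apply (cv_subseq (fun n => v (phi n) j)); auto. apply Hw; lia.
Qed.

Definition qf k (S : mat) (v : vec) := dot k v (mv k S v).

Lemma qf_cv k S (v : nat -> vec) w : (forall j, (j < k)%nat -> Un_cv (fun n => v n j) (w j)) ->
  Un_cv (fun n => qf k S (v n)) (qf k S w).
Proof.
  intros H. apply cv_fsum. intros i Hi. apply CV_mult; auto.
  apply cv_fsum. intros j Hj. apply CV_mult; [apply cv_const | auto].
Qed.

Lemma dot_cv k (v : nat -> vec) w : (forall j, (j < k)%nat -> Un_cv (fun n => v n j) (w j)) ->
  Un_cv (fun n => dot k (v n) (v n)) (dot k w w).
Proof. intros H. apply cv_fsum. intros i Hi. apply CV_mult; auto. Qed.

Lemma qf_scal k S c v : qf k S (fun i => c * v i) = c * c * qf k S v.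
Proof. unfold qf, dot. rewrite <- fsum_scal. apply fsum_ext; intros. rewrite mv_scal. ring. Qed.

Lemma qf_expand k S w g e : qf k S (fun i => w i + e * g i)
  = qf k S w + e * (dot k w (mv k S g) + dot k g (mv k S w)) + e * e * qf k S g.
Proof.
  unfold qf, dot. rewrite <- fsum_plus, <- !fsum_scal, <- !fsum_plus. apply fsum_ext; intros.
  replace (mv k S (fun i0 => w i0 + e * g i0) i) with (mv k S w i + e * mv k S g i); [ring |].
  unfold mv. rewrite <- fsum_scal, <- fsum_plus. apply fsum_ext; intros; ring.
Qed.

Lemma dot_mv_sym k S u v : symmetric k S -> dot k u (mv k S v) = dot k v (mv k S u).
Proof.
  intros HS. unfold dot, mv.
  transitivity (fsum k (fun i => fsum k (fun j => u i * S i j * v j))).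
  - apply fsum_ext; intros; rewrite <- fsum_scal; apply fsum_ext; intros; ring.
  - rewrite fsum_swap. apply fsum_ext; intros. rewrite <- fsum_scal; apply fsum_ext; intros.
    rewrite (HS i0 i) by auto. ring.
Qed.

Lemma unit_sphere_coord k v j : dot k v v = 1 -> (j < k)%nat -> -1 <= v j <= 1.
Proof.
  intros Hv Hj. pose proof (Rabs_le_vnorm k v j Hj) as H.
  rewrite vnorm_dot, Hv, sqrt_1 in H. unfold Rabs in H. destruct (Rcase_abs (v j)); lra.
Qed.

Section Rayleigh.
Variables (k : nat) (Sm : mat).

Definition rayleigh_values (s : R) : Prop := exists v, dot k v v = 1 /\ s = qf k Sm v.

Lemma rayleigh_values_bound : bound rayleigh_values.
Proof.
  exists (fsum k (fun i => fsum k (fun j => Rabs (Sm i j)))).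
  intros s [v [Hv ->]]. unfold qf, dot, mv.
  eapply Rle_trans; [apply Rle_abs |]. eapply Rle_trans; [apply fsum_abs |].
  apply fsum_le; intros i Hi. rewrite Rabs_mult.
  assert (Rabs (v i) <= 1) by (apply Rabs_le, (unit_sphere_coord k); auto).
  assert (Rabs (fsum k (fun j => Sm i j * v j)) <= fsum k (fun j => Rabs (Sm i j))).
  { eapply Rle_trans; [apply fsum_abs |]. apply fsum_le; intros j Hj. rewrite Rabs_mult.
    assert (Rabs (v j) <= 1) by (apply Rabs_le, (unit_sphere_coord k); auto).
    pose proof (Rabs_pos (Sm i j)). pose proof (Rabs_pos (v j)). nra. }
  pose proof (Rabs_pos (v i)). pose proof (Rabs_pos (fsum k (fun j => Sm i j * v j))). nra.
Qed.

Lemma qf_le_rayleigh_ub lam : is_upper_bound rayleigh_values lam ->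
  forall v, qf k Sm v <= lam * dot k v v.
Proof.
  intros Hub v. pose proof (dot_self_nonneg k v).
  destruct (Req_dec (dot k v v) 0) as [E | E].
  - rewrite E, Rmult_0_r. unfold qf, dot. rewrite (fsum_ext k _ (fun _ => 0)), fsum_zero; [lra |].
    intros i Hi. rewrite (dot_eq0_coord k v E) by auto. ring.
  - set (c := / sqrt (dot k v v)).
    assert (Hsq : 0 < sqrt (dot k v v)) by (apply sqrt_lt_R0; lra).
    assert (Hc : c * c * dot k v v = 1).
    { unfold c. rewrite <- (sqrt_sqrt (dot k v v)) at 3 by lra. field. lra. }
    assert (qf k Sm (fun i => c * v i) <= lam).
    { apply Hub. exists (fun i => c * v i). rewrite dot_scal. auto. }
    rewrite qf_scal in H0.
    assert (0 < c * c) by (unfold c; pose proof (Rinv_0_lt_compat _ Hsq); nra).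
    apply Rmult_le_reg_l with (c * c); auto.
    replace (c * c * (lam * dot k v v)) with (lam * (c * c * dot k v v)) by ring.
    rewrite Hc, Rmult_1_r. exact H0.
Qed.

Lemma rayleigh_sup_attained lam : is_lub rayleigh_values lam ->
  exists w, dot k w w = 1 /\ qf k Sm w = lam.
Proof.
  intros [Hub Hlub].
  assert (Hseq : forall n : nat, {v | dot k v v = 1 /\ lam - RinvN n < qf k Sm v}).
  { intros n. apply constructive_indefinite_description. apply NNPP. intros Hn.
    assert (lam <= lam - RinvN n); [| pose proof (cond_pos (RinvN n)); lra].
    apply Hlub. intros s [v [Hv ->]]. apply Rnot_lt_le. intros Hlt. apply Hn. exists v; auto. }
  set (vs := fun n => proj1_sig (Hseq n)).
  assert (Hvs : forall n, dot k (vs n) (vs n) = 1 /\ lam - RinvN n < qf k Sm (vs n))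
    by (intros; unfold vs; destruct (Hseq n); auto).
  destruct (bolzano_weierstrass vs k) as [phi [w [Hphi Hw]]].
  { intros n j Hj. apply (unit_sphere_coord k); auto. apply Hvs. }
  assert (Hw1 : dot k w w = 1).
  { symmetry. apply (UL_sequence (fun n => dot k (vs (phi n)) (vs (phi n)))); [| apply dot_cv; auto].
    eapply Un_cv_ext; [| apply cv_const]. intros n. simpl. rewrite (proj1 (Hvs (phi n))). auto. }
  exists w. split; auto. apply Rle_antisym.
  - pose proof (qf_le_rayleigh_ub lam Hub w). rewrite Hw1 in H. lra.
  - apply (cv_ge (fun n => qf k Sm (vs (phi n)) + RinvN (phi n))).
    + replace (qf k Sm w) with (qf k Sm w + 0) by ring.
      apply CV_plus; [apply qf_cv; auto | apply (cv_subseq (fun n => pos (RinvN n))); auto].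
      apply RinvN_cv.
    + intros n. pose proof (proj2 (Hvs (phi n))). lra.
Qed.

(* A maximiser of the Rayleigh quotient is an eigenvector: the quadratic
   e |-> lam |w + e g|^2 - qf (w + e g), with g = lam w - Sm w, is nonnegative
   but has slope 2 |g|^2 at 0. *)
Lemma rayleigh_max_is_eigen lam w : symmetric k Sm ->
  (forall v, qf k Sm v <= lam * dot k v v) -> dot k w w = 1 -> qf k Sm w = lam ->
  real_eigen k Sm lam.
Proof.
  intros HS HA Hw1 Hqw.
  set (g := fun i => lam * w i - mv k Sm w i).
  assert (Hgw : dot k g g = lam * dot k w g - dot k g (mv k Sm w)).
  { unfold dot, g. rewrite <- fsum_scal, <- fsum_minus. apply fsum_ext; intros; ring. }
  assert (Hpos : forall e, 0 <= 2 * e * dot k g g + e * e * (lam * dot k g g - qf k Sm g)).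
  { intros e. specialize (HA (fun i => w i + e * g i)).
    rewrite dot_expand, qf_expand, (dot_mv_sym k Sm w g HS), Hqw, Hw1 in HA.
    replace (2 * e * dot k g g + e * e * (lam * dot k g g - qf k Sm g)) with
      (lam * (1 + 2 * e * dot k w g + e * e * dot k g g)
       - (lam + e * (dot k g (mv k Sm w) + dot k g (mv k Sm w)) + e * e * qf k Sm g))
      by (rewrite Hgw at 2; ring).
    lra. }
  assert (HG : dot k g g = 0).
  { pose proof (dot_self_nonneg k g). pose proof (HA g).
    set (c := lam * dot k g g - qf k Sm g) in *. assert (0 <= c) by (unfold c; lra).
    set (G := dot k g g) in *. specialize (Hpos (- G / (c + 1))).
    replace (2 * (- G / (c + 1)) * G + - G / (c + 1) * (- G / (c + 1)) * c)
      with (- G * G * (c + 2) / ((c + 1) * (c + 1))) in Hpos by (field; lra).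
    assert (0 < (c + 1) * (c + 1)) by nra.
    assert (0 <= - G * G * (c + 2)).
    { apply Rmult_le_reg_r with (/ ((c + 1) * (c + 1))); [apply Rinv_0_lt_compat; auto |].
      rewrite Rmult_0_l. auto. }
    nra. }
  exists w. split.
  - apply NNPP. intros Hn. assert (dot k w w = 0); [| lra].
    unfold dot. rewrite (fsum_ext k _ (fun _ => 0)), fsum_zero; auto. intros i Hi.
    destruct (Req_dec (w i) 0) as [-> | E]; [ring | exfalso; apply Hn; exists i; auto].
  - intros i Hi. pose proof (dot_eq0_coord k g HG i Hi). unfold g in H. lra.
Qed.

Lemma qf_le_max_eig mu : symmetric k Sm -> is_max_eig k Sm mu ->
  forall v, qf k Sm v <= mu * dot k v v.
Proof.
  intros HS [[v0 [[i0 [Hi0 _]] _]] Hmax].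
  set (e0 := fun j => if Nat.eqb i0 j then 1 else 0).
  assert (HQne : exists s, rayleigh_values s).
  { exists (qf k Sm e0), e0. split; auto. unfold dot.
    rewrite (fsum_ext k _ (fun j => (if Nat.eqb i0 j then 1 else 0) * 1)), fsum_delta; auto.
    intros j _. unfold e0. destruct (Nat.eqb i0 j); ring. }
  destruct (completeness _ rayleigh_values_bound HQne) as [lam Hlam].
  destruct (rayleigh_sup_attained lam Hlam) as [w [Hw1 Hqw]].
  pose proof (qf_le_rayleigh_ub lam (proj1 Hlam)) as HA.
  pose proof (Hmax lam (rayleigh_max_is_eigen lam w HS HA Hw1 Hqw)).
  intros v. specialize (HA v). pose proof (dot_self_nonneg k v). nra.
Qed.
End Rayleigh.

Lemma log_norm_quad k A mu : is_log_norm k A mu ->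
  forall v, dot k v (mv k A v) <= mu * dot k v v.
Proof.
  intros H v. set (Sm := mscal (/ 2) (madd A (mtr A))).
  assert (HS : symmetric k Sm) by (intros i j _ _; unfold Sm, mscal, madd, mtr; ring).
  replace (dot k v (mv k A v)) with (qf k Sm v); [apply qf_le_max_eig; auto |].
  assert (E : dot k v (mv k (mtr A) v) = dot k v (mv k A v)).
  { unfold dot, mv, mtr. transitivity (fsum k (fun i => fsum k (fun j => v i * A j i * v j))).
    - apply fsum_ext; intros; rewrite <- fsum_scal; apply fsum_ext; intros; ring.
    - rewrite fsum_swap. apply fsum_ext; intros; rewrite <- fsum_scal; apply fsum_ext; intros; ring. }
  unfold qf, dot. rewrite (fsum_ext k _ (fun i => / 2 * (v i * mv k A v i + v i * mv k (mtr A) v i))).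
  - rewrite fsum_scal, fsum_plus. fold (dot k v (mv k A v)) (dot k v (mv k (mtr A) v)).
    rewrite E. field.
  - intros i _. unfold Sm, mscal, mv, madd.
    rewrite <- !fsum_scal, <- fsum_plus, <- fsum_scal. apply fsum_ext; intros; ring.
Qed.

(** * A Gronwall comparison between Caratheodory solutions *)

Lemma derivable_pt_lim_exp_affine c a x :
  derivable_pt_lim (fun t => exp (c * (t - a))) x (c * exp (c * (x - a))).
Proof.
  replace (c * exp (c * (x - a))) with (exp (c * (x - a)) * (c * (1 - 0))) by ring.
  apply (derivable_pt_lim_comp (fun t => c * (t - a)) exp).
  - apply derivable_pt_lim_scal, derivable_pt_lim_minus;
      [apply derivable_pt_lim_id | apply derivable_pt_lim_const].
  - apply derivable_pt_lim_exp.
Qed.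

Lemma derivable_pt_lim_ext f g x a :
  (forall t, f t = g t) -> derivable_pt_lim f x a -> derivable_pt_lim g x a.
Proof. intros E. replace g with f; auto. apply functional_extensionality; auto. Qed.

Lemma derivable_pt_lim_fsum n (h : nat -> R -> R) (h' : nat -> R) x :
  (forall i, (i < n)%nat -> derivable_pt_lim (h i) x (h' i)) ->
  derivable_pt_lim (fun t => fsum n (fun i => h i t)) x (fsum n h').
Proof.
  induction n; intros H; simpl; [apply derivable_pt_lim_const |].
  apply derivable_pt_lim_plus; [apply IHn; intros |]; apply H; lia.
Qed.

Lemma exp_le x y : x <= y -> exp x <= exp y.
Proof. intros H. destruct (Req_dec x y) as [-> | E]; [lra | left; apply exp_increasing; lra]. Qed.

Lemma sqrt_plus_le x y : 0 <= x -> 0 <= y -> sqrt (x + y) <= sqrt x + sqrt y.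
Proof.
  intros Hx Hy. pose proof (sqrt_pos x); pose proof (sqrt_pos y).
  rewrite <- (sqrt_square (sqrt x + sqrt y)) by lra. apply sqrt_le_1_alt.
  pose proof (sqrt_sqrt x Hx). pose proof (sqrt_sqrt y Hy). nra.
Qed.

Lemma sqrt_shift_lipschitz eta x y : eta > 0 -> 0 <= x -> 0 <= y ->
  Rabs (sqrt (x + eta) - sqrt (y + eta)) <= / (2 * sqrt eta) * Rabs (x - y).
Proof.
  intros He Hx Hy. assert (Hs : 0 < sqrt eta) by (apply sqrt_lt_R0; lra).
  assert (sqrt eta <= sqrt (x + eta)) by (apply sqrt_le_1_alt; lra).
  assert (sqrt eta <= sqrt (y + eta)) by (apply sqrt_le_1_alt; lra).
  assert (E : sqrt (x + eta) - sqrt (y + eta) = (x - y) / (sqrt (x + eta) + sqrt (y + eta))).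
  { field_simplify_eq; [| lra]. rewrite <- !Rsqr_pow2, !Rsqr_sqrt by lra. ring. }
  rewrite E. unfold Rdiv. rewrite Rabs_mult, Rmult_comm.
  apply Rmult_le_compat_r; [apply Rabs_pos |].
  rewrite Rabs_right; [apply Rinv_le_contravar; lra |].
  apply Rle_ge, Rlt_le, Rinv_0_lt_compat; lra.
Qed.

(* [exp_gain mu r] is the integral of exp (mu s) over [0, r] when mu > 0; for mu <= 0 the
   value r is an upper bound for it, and only mu >= 0 is used below. *)
Definition exp_gain (mu r : R) : R := if Rle_dec mu 0 then r else (exp (mu * r) - 1) / mu.

Lemma exp_gain_nonneg mu r : 0 <= mu -> 0 <= r -> 0 <= exp_gain mu r.
Proof.
  intros Hm Hr. unfold exp_gain. destruct (Rle_dec mu 0); auto.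
  apply Rdiv_le_0_compat; [| lra].
  pose proof (exp_le 0 (mu * r) ltac:(nra)). rewrite exp_0 in H. lra.
Qed.

Lemma exp_gain_mono mu r1 r2 : 0 <= mu -> 0 <= r1 -> r1 <= r2 -> exp_gain mu r1 <= exp_gain mu r2.
Proof.
  intros Hm H1 H2. unfold exp_gain. destruct (Rle_dec mu 0); auto.
  unfold Rdiv. apply Rmult_le_compat_r; [apply Rlt_le, Rinv_0_lt_compat; lra |].
  pose proof (exp_le (mu * r1) (mu * r2) ltac:(nra)). lra.
Qed.

Section Comparison.
Variables (nx : nat) (A : mat) (mu : R) (bk : vec) (x y d g : R -> vec) (a s : R)
  (N : R -> Prop) (G D : R).
Hypotheses (Hmu : 0 <= mu) (Has : a <= s) (HG : 0 <= G) (HD : 0 <= D)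
  (HA : forall v, dot nx v (mv nx A v) <= mu * dot nx v v)
  (Hxac : forall i, (i < nx)%nat -> abs_cont_on (fun t => x t i) a s)
  (Hyac : forall i, (i < nx)%nat -> abs_cont_on (fun t => y t i) a s)
  (HN : null_set N)
  (Hxd : forall t, a <= t < s -> ~ N t -> forall i, (i < nx)%nat ->
          derivable_pt_lim (fun r => x r i) t (mv nx A (x t) i + bk i + d t i))
  (Hyd : forall t, a <= t < s -> forall i, (i < nx)%nat ->
          derivable_pt_lim (fun r => y r i) t (mv nx A (y t) i + bk i + g t i))
  (Hdb : forall t, a <= t < s -> vnorm nx (d t) <= D)
  (Hgb : forall t, a <= t < s -> vnorm nx (g t) <= G).

Let e t := vsub (y t) (x t).
Let V t := dot nx (e t) (e t).
Let e' t := fun i => mv nx A (e t) i + g t i - d t i.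
Let decay t := exp (- mu * (t - a)).
(* the integral of [decay] over [a, t] *)
Let Psi t := if Rle_dec mu 0 then t - a else (1 - exp (- mu * (t - a))) / mu.

Lemma deviation_deriv t : a <= t < s -> ~ N t -> forall i, (i < nx)%nat ->
  derivable_pt_lim (fun r => e r i) t (e' t i).
Proof.
  intros Ht HNt i Hi. apply derivable_pt_lim_ext with (fun r => y r i - x r i); [reflexivity |].
  replace (e' t i) with ((mv nx A (y t) i + bk i + g t i) - (mv nx A (x t) i + bk i + d t i))
    by (unfold e', e; rewrite mv_vsub; ring).
  apply derivable_pt_lim_minus; [apply Hyd | apply Hxd]; auto.
Qed.

Lemma deviation_sq_deriv t : a <= t < s -> ~ N t ->
  derivable_pt_lim V t (2 * dot nx (e t) (e' t)).
Proof.
  intros Ht HNt. unfold V, dot.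
  replace (2 * fsum nx (fun i => e t i * e' t i)) with (fsum nx (fun i => e' t i * e t i + e t i * e' t i))
    by (rewrite <- fsum_scal; apply fsum_ext; intros; ring).
  apply derivable_pt_lim_fsum. intros i Hi.
  apply derivable_pt_lim_mult; apply deviation_deriv; auto.
Qed.

Lemma deviation_rate t : a <= t < s -> dot nx (e t) (e' t) <= mu * V t + vnorm nx (e t) * (G + D).
Proof.
  intros Ht.
  replace (dot nx (e t) (e' t)) with
    (dot nx (e t) (mv nx A (e t)) + dot nx (e t) (g t) + dot nx (e t) (fun i => - d t i))
    by (unfold dot, e'; rewrite <- !fsum_plus; apply fsum_ext; intros; ring).
  pose proof (HA (e t)). pose proof (cauchy_schwarz nx (e t) (g t)).
  pose proof (cauchy_schwarz nx (e t) (fun i => - d t i)). rewrite vnorm_opp in H1.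
  pose proof (Hdb t Ht). pose proof (Hgb t Ht). pose proof (vnorm_nonneg nx (e t)).
  unfold V. nra.
Qed.

Lemma Psi_deriv t : derivable_pt_lim Psi t (decay t).
Proof.
  unfold Psi, decay. destruct (Rle_dec mu 0).
  - replace mu with 0 by lra. replace (- 0 * (t - a)) with 0 by ring. rewrite exp_0.
    replace 1 with (1 - 0) by ring.
    apply derivable_pt_lim_minus; [apply derivable_pt_lim_id | apply derivable_pt_lim_const].
  - apply derivable_pt_lim_ext with (fun r => / mu * (1 - exp (- mu * (r - a))));
      [intros; unfold Rdiv; ring |].
    replace (exp (- mu * (t - a))) with (/ mu * (0 - - mu * exp (- mu * (t - a)))) by (field; lra).
    apply derivable_pt_lim_scal, derivable_pt_lim_minus;
      [apply derivable_pt_lim_const | apply derivable_pt_lim_exp_affine].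
Qed.

Lemma decay_le_1 t : a <= t -> decay t <= 1.
Proof. intros Ht. unfold decay. rewrite <- exp_0. apply exp_le. nra. Qed.

Lemma abs_cont_deviation_sq : abs_cont_on V a s.
Proof.
  apply abs_cont_fsum. intros i Hi.
  apply abs_cont_mult; auto; apply abs_cont_minus; auto.
Qed.

Lemma abs_cont_Psi : abs_cont_on Psi a s.
Proof.
  apply abs_cont_of_deriv_bounded with decay 1; [lra | intros; apply Psi_deriv |].
  intros t Ht. rewrite Rabs_right; [apply decay_le_1; lra | apply Rle_ge, Rlt_le, exp_pos].
Qed.

Lemma abs_cont_decay : abs_cont_on decay a s.
Proof.
  apply abs_cont_of_deriv_bounded with (fun t => - mu * decay t) mu;
    [lra | intros; apply derivable_pt_lim_exp_affine |].
  intros t Ht. rewrite Rabs_mult, Rabs_Ropp, (Rabs_right mu), Rabs_right by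
    (lra || apply Rle_ge, Rlt_le, exp_pos).
  pose proof (decay_le_1 t ltac:(lra)). nra.
Qed.

(* Lyapunov function: sqrt (|e|^2 + eta) is a smooth surrogate for |e|, weighted by
   exp (- mu (t - a)), minus the accumulated forcing. *)
Let lyap eta t := decay t * sqrt (V t + eta) - (G + D) * Psi t.

Lemma abs_cont_lyap eta : eta > 0 -> abs_cont_on (lyap eta) a s.
Proof.
  intros Heta. apply abs_cont_minus; [apply abs_cont_mult; auto; [apply abs_cont_decay |] |].
  - apply abs_cont_comp_lipschitz with (phi := fun z => sqrt (z + eta)) (L := / (2 * sqrt eta)).
    + apply Rlt_le, Rinv_0_lt_compat. pose proof (sqrt_lt_R0 eta Heta); lra.
    + apply abs_cont_deviation_sq.
    + intros; apply dot_self_nonneg.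
    + intros; apply sqrt_shift_lipschitz; auto.
  - apply abs_cont_scal, abs_cont_Psi.
Qed.

Lemma lyap_deriv_nonpos eta t : eta > 0 -> a <= t < s -> ~ N t ->
  exists D', derivable_pt_lim (lyap eta) t D' /\ D' <= 0.
Proof.
  intros Heta Ht HNt.
  pose proof (dot_self_nonneg nx (e t)) as HV. fold (V t) in HV.
  set (r := sqrt (V t + eta)).
  assert (Hr : 0 < r) by (apply sqrt_lt_R0; lra).
  assert (Hrr : r * r = V t + eta) by (apply sqrt_sqrt; lra).
  set (r' := / (2 * r) * (2 * dot nx (e t) (e' t) + 0)).
  exists (- mu * decay t * r + decay t * r' - (G + D) * decay t). split.
  - apply derivable_pt_lim_minus; [| apply derivable_pt_lim_scal, Psi_deriv].
    apply derivable_pt_lim_mult; [apply derivable_pt_lim_exp_affine |].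
    apply (derivable_pt_lim_comp (fun t => V t + eta) sqrt).
    + apply derivable_pt_lim_plus; [apply deviation_sq_deriv; auto | apply derivable_pt_lim_const].
    + apply derivable_pt_lim_sqrt. lra.
  - assert (Hdec : 0 < decay t) by apply exp_pos.
    assert (Hnorm : vnorm nx (e t) <= r) by (unfold r; rewrite vnorm_dot; apply sqrt_le_1_alt; fold (V t); lra).
    assert (Hr' : r' * r = dot nx (e t) (e' t)) by (unfold r'; field; lra).
    pose proof (deviation_rate t Ht). pose proof (vnorm_nonneg nx (e t)).
    assert (r' <= mu * r + (G + D)).
    { apply Rmult_le_reg_r with r; auto. rewrite Hr'. nra. }
    nra.
Qed.

Lemma comparison_eta eta : eta > 0 ->
  vnorm nx (e s) <= exp (mu * (s - a)) * (vnorm nx (e a) + sqrt eta) + (G + D) * exp_gain mu (s - a).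
Proof.
  intros Heta.
  assert (HF : lyap eta s <= lyap eta a).
  { apply abs_cont_nonincreasing with N; auto.
    - apply abs_cont_lyap; auto.
    - intros t Ht HNt. apply lyap_deriv_nonpos; auto. }
  assert (HPa : Psi a = 0).
  { unfold Psi. destruct (Rle_dec mu 0); [ring |].
    replace (- mu * (a - a)) with 0 by ring. rewrite exp_0. field; lra. }
  assert (Hda : decay a = 1) by (unfold decay; replace (- mu * (a - a)) with 0 by ring; apply exp_0).
  assert (Hmul : exp (mu * (s - a)) * decay s = 1).
  { unfold decay. rewrite <- exp_plus. replace (mu * (s - a) + - mu * (s - a)) with 0 by ring.
    apply exp_0. }
  assert (HP : exp (mu * (s - a)) * Psi s = exp_gain mu (s - a)).
  { unfold Psi, exp_gain. destruct (Rle_dec mu 0).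
    - replace mu with 0 by lra. rewrite Rmult_0_l, exp_0. ring.
    - unfold decay in Hmul. unfold Rdiv.
      rewrite <- Rmult_assoc, Rmult_minus_distr_l, Rmult_1_r, Hmul. reflexivity. }
  unfold lyap in HF. rewrite HPa, Hda in HF.
  assert (HEs : 0 < exp (mu * (s - a))) by apply exp_pos.
  pose proof (dot_self_nonneg nx (e s)). pose proof (dot_self_nonneg nx (e a)).
  assert (vnorm nx (e s) <= sqrt (V s + eta)) by (rewrite vnorm_dot; apply sqrt_le_1_alt; unfold V; lra).
  assert (sqrt (V a + eta) <= vnorm nx (e a) + sqrt eta)
    by (rewrite vnorm_dot; apply sqrt_plus_le; unfold V; lra).
  apply Rmult_le_compat_l with (r := exp (mu * (s - a))) in HF; [| lra].
  rewrite Rmult_minus_distr_l, <- Rmult_assoc, Hmul, <- Rmult_assoc,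
    (Rmult_comm _ (G + D)), Rmult_assoc, HP in HF.
  nra.
Qed.

Lemma comparison : vnorm nx (vsub (y s) (x s))
  <= exp (mu * (s - a)) * vnorm nx (vsub (y a) (x a)) + (G + D) * exp_gain mu (s - a).
Proof.
  fold (e s) (e a).
  set (X := vnorm nx (e s)).
  set (Y := exp (mu * (s - a)) * vnorm nx (e a) + (G + D) * exp_gain mu (s - a)).
  destruct (Rle_dec X Y) as [| Hn]; auto. exfalso.
  assert (HE : 0 < exp (mu * (s - a))) by apply exp_pos.
  (* let eta -> 0 in [comparison_eta] *)
  set (q := (X - Y) / (2 * exp (mu * (s - a)))).
  assert (Hq : 0 < q) by (unfold q; apply Rdiv_lt_0_compat; lra).
  pose proof (comparison_eta (q * q) ltac:(nra)). rewrite sqrt_square in H by lra.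
  assert (exp (mu * (s - a)) * q = (X - Y) / 2) by (unfold q; field; lra).
  unfold X, Y in *. nra.
Qed.
End Comparison.

(** * The nominal trajectory as a power series *)

Lemma fsum_delta_r k j (f : nat -> R) :
  (j < k)%nat -> fsum k (fun l => f l * (if Nat.eqb l j then 1 else 0)) = f j.
Proof.
  intros. rewrite <- (fsum_delta k j f) by auto. apply fsum_ext; intros.
  destruct (Nat.eqb_spec i j), (Nat.eqb_spec j i); try lia; ring.
Qed.

Lemma mm_assoc k X Y Z i j : mm k (mm k X Y) Z i j = mm k X (mm k Y Z) i j.
Proof.
  unfold mm. transitivity (fsum k (fun l => fsum k (fun m => X i m * Y m l * Z l j))).
  - apply fsum_ext; intros. rewrite Rmult_comm, <- fsum_scal. apply fsum_ext; intros; ring.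
  - rewrite fsum_swap. apply fsum_ext; intros. rewrite <- fsum_scal. apply fsum_ext; intros; ring.
Qed.

Lemma mm_idm_l k X i j : (i < k)%nat -> mm k idm X i j = X i j.
Proof. intros. apply (fsum_delta k i (fun l => X l j)); auto. Qed.

Lemma mm_idm_r k X i j : (j < k)%nat -> mm k X idm i j = X i j.
Proof. intros. apply (fsum_delta_r k j (fun l => X i l)); auto. Qed.

Lemma mpow_comm k A n i j : (i < k)%nat -> (j < k)%nat ->
  mm k (mpow k A n) A i j = mm k A (mpow k A n) i j.
Proof.
  revert i j. induction n; intros i j Hi Hj; simpl; [rewrite mm_idm_l, mm_idm_r; auto |].
  transitivity (mm k (mm k A (mpow k A n)) A i j); [| apply mm_assoc].
  unfold mm at 1 3. apply fsum_ext; intros. fold (mm k (mpow k A n) A). rewrite IHn; auto.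
Qed.

Section MatrixPowers.
Variables (k : nat) (A : mat).

Definition mpow_vec n (v : vec) : vec := mv k (mpow k A n) v.

Lemma mpow_vec_0 v i : (i < k)%nat -> mpow_vec 0 v i = v i.
Proof. intros. apply (fsum_delta k i v); auto. Qed.

Lemma mpow_vec_S n v i : (i < k)%nat -> mpow_vec (S n) v i = mv k A (mpow_vec n v) i.
Proof.
  intros Hi. unfold mpow_vec. simpl. rewrite <- mv_mm. unfold mv.
  apply fsum_ext; intros. rewrite mpow_comm; auto.
Qed.

Definition mpow_growth := fsum k (fun l => fsum k (fun j => Rabs (A l j))) + 1.

Lemma mpow_growth_ge1 : 1 <= mpow_growth.
Proof.
  unfold mpow_growth.
  assert (0 <= fsum k (fun l => fsum k (fun j => Rabs (A l j))))
    by (apply fsum_nonneg; intros; apply fsum_nonneg; intros; apply Rabs_pos).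
  lra.
Qed.

Lemma mpow_entry_bound n i j : (i < k)%nat -> (j < k)%nat ->
  Rabs (mpow k A n i j) <= mpow_growth ^ n.
Proof.
  pose proof mpow_growth_ge1.
  revert i j. induction n; intros i j Hi Hj; simpl.
  - unfold idm. destruct (Nat.eqb i j); [rewrite Rabs_R1 | rewrite Rabs_R0]; lra.
  - unfold mm. eapply Rle_trans; [apply fsum_abs |].
    apply Rle_trans with (fsum k (fun l => mpow_growth ^ n * Rabs (A l j))).
    { apply fsum_le; intros. rewrite Rabs_mult.
      apply Rmult_le_compat_r; [apply Rabs_pos | auto]. }
    rewrite fsum_scal, (Rmult_comm mpow_growth).
    apply Rmult_le_compat_l; [apply pow_le; lra |].
    unfold mpow_growth.
    apply Rle_trans with (fsum k (fun l => fsum k (fun j0 => Rabs (A l j0)))); [| lra].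
    apply fsum_le; intros l Hl. apply (fsum_le_term k (fun j0 => Rabs (A l j0))); auto.
    intros; apply Rabs_pos.
Qed.

Lemma mpow_vec_bound n v i : (i < k)%nat ->
  Rabs (mpow_vec n v i) <= mpow_growth ^ n * fsum k (fun j => Rabs (v j)).
Proof.
  intros Hi. unfold mpow_vec, mv. eapply Rle_trans; [apply fsum_abs |].
  rewrite <- fsum_scal. apply fsum_le; intros. rewrite Rabs_mult.
  apply Rmult_le_compat_r; [apply Rabs_pos | apply mpow_entry_bound; auto].
Qed.
End MatrixPowers.

Lemma is_series_zero : is_series (fun _ : nat => 0) 0.
Proof.
  apply is_series_Reals. intros e He. exists O. intros n _. rewrite sum_cte. unfold R_dist.
  replace (0 * INR (S n) - 0) with 0 by ring. rewrite Rabs_R0; lra.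
Qed.

Lemma is_series_first (v : R) : is_series (fun n => if Nat.eqb n 0 then v else 0) v.
Proof.
  apply is_series_Reals. intros e He. exists O. intros n _. unfold R_dist.
  assert (Hs : forall m, sum_f_R0 (fun n => if Nat.eqb n 0 then v else 0) m = v)
    by (induction m; simpl; auto; rewrite IHm; ring).
  rewrite Hs. replace (v - v) with 0 by ring. rewrite Rabs_R0; lra.
Qed.

Lemma is_series_ext_R (a b : nat -> R) l :
  (forall n, a n = b n) -> is_series a l -> is_series b l.
Proof. apply is_series_ext. Qed.

Lemma is_series_Rplus a b la lb :
  is_series a la -> is_series b lb -> is_series (fun n => a n + b n) (la + lb).
Proof. intros. apply (is_series_plus a b la lb); auto. Qed.

Lemma is_series_Rscal c a l : is_series a l -> is_series (fun n => c * a n) (c * l).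
Proof. intros. apply (is_series_scal c a l); auto. Qed.

Lemma is_series_fsum n (a : nat -> nat -> R) (l : nat -> R) :
  (forall j, (j < n)%nat -> is_series (a j) (l j)) ->
  is_series (fun p => fsum n (fun j => a j p)) (fsum n l).
Proof.
  induction n; intros H; simpl; [apply is_series_zero |].
  apply is_series_Rplus; [apply IHn; intros |]; apply H; lia.
Qed.

Definition entire (a : nat -> R) : Prop := forall y, Rbar_lt (Rabs y) (CV_radius a).

Lemma exp_term_le y n : 0 <= y -> y ^ n / INR (fact n) <= exp y.
Proof.
  intros Hy. eapply Rle_trans; [| apply (exp_ge_taylor y n Hy)].
  destruct n; simpl; [lra |].
  assert (0 <= sum_f_R0 (fun k => y ^ k / INR (fact k)) n); [| lra].
  apply cond_pos_sum. intros. apply Rdiv_le_0_compat; [apply pow_le; auto | apply INR_fact_lt_0].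
Qed.

Lemma entire_of_exp_bound (a : nat -> R) C M : 0 <= C -> 0 <= M ->
  (forall p, Rabs (a p) <= C * M ^ p / INR (fact p)) -> entire a.
Proof.
  intros HC HM Ha x. pose proof (Rabs_pos x). set (r := Rabs x + 1).
  assert (Hr : Rbar_le r (CV_radius a)).
  { destruct (CV_radius_bounded a) as [Hub _]. apply Hub. exists (C * exp (M * r)). intros n.
    rewrite Rabs_mult, <- RPow_abs. unfold r. rewrite (Rabs_right (Rabs x + 1)) by lra.
    eapply Rle_trans; [apply Rmult_le_compat_r; [apply pow_le; lra | apply Ha] |].
    replace (C * M ^ n / INR (fact n) * (Rabs x + 1) ^ n)
      with (C * ((M * (Rabs x + 1)) ^ n / INR (fact n)))
      by (rewrite Rpow_mult_distr; field; apply INR_fact_neq_0).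
    apply Rmult_le_compat_l; auto. apply exp_term_le. nra. }
  destruct (CV_radius a) as [l | |]; simpl in *; auto. unfold r in Hr; lra.
Qed.

Lemma entire_PS_derive (a : nat -> R) : entire a -> entire (PS_derive a).
Proof. intros H y. rewrite CV_radius_derive. auto. Qed.

Lemma is_series_PSeries (a : nat -> R) x : entire a ->
  is_series (fun n => a n * x ^ n) (PSeries a x).
Proof. intros H. apply Series_correct, ex_pseries_R, CV_radius_inside, H. Qed.

Lemma derivable_pt_lim_PSeries_shift (a : nat -> R) (a0 t : R) : entire a ->
  derivable_pt_lim (fun r => PSeries a (r - a0)) t (PSeries (PS_derive a) (t - a0)).
Proof.
  intros H.
  replace (PSeries (PS_derive a) (t - a0)) with (PSeries (PS_derive a) (t - a0) * (1 - 0)) by ring.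
  apply (derivable_pt_lim_comp (fun r => r - a0) (PSeries a)).
  - apply derivable_pt_lim_minus; [apply derivable_pt_lim_id | apply derivable_pt_lim_const].
  - apply is_derive_Reals, is_derive_PSeries, H.
Qed.

Lemma expm_is_series k A t E i j : is_expm k A t E -> (i < k)%nat -> (j < k)%nat ->
  is_series (fun p => mpow k A p i j / INR (fact p) * t ^ p) (E i j).
Proof.
  intros H Hi Hj. specialize (H i j Hi Hj). apply is_series_Reals in H.
  eapply is_series_ext_R; [| apply H]. intros n. simpl. field. apply INR_fact_neq_0.
Qed.

Lemma INR_fact_S n : INR (S n) / INR (fact (S n)) = / INR (fact n).
Proof. rewrite fact_simpl, mult_INR. field. split; [apply INR_fact_neq_0 | apply not_0_INR; lia]. Qed.

(* The solution of y' = A y + B kc with y(a) = c, i.e.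
   y(r) = exp (A (r - a)) c + int_0^(r - a) exp (A s) B kc ds, expanded around a. *)
Section Nominal.
Variables (nx nu : nat) (A B : mat) (c kc : vec).
Let bkc := mv nu B kc.

Definition nominal_coef i p := mpow_vec nx A p c i / INR (fact p)
  + match p with O => 0 | S q => mpow_vec nx A q bkc i / INR (fact p) end.

Definition nominal (a r : R) : vec := fun i => PSeries (nominal_coef i) (r - a).

Lemma nominal_coef_entire i : (i < nx)%nat -> entire (nominal_coef i).
Proof.
  intros Hi. set (C1 := fsum nx (fun j => Rabs (c j))). set (C2 := fsum nx (fun j => Rabs (bkc j))).
  assert (HC1 : 0 <= C1) by (apply fsum_nonneg; intros; apply Rabs_pos).
  assert (HC2 : 0 <= C2) by (apply fsum_nonneg; intros; apply Rabs_pos).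
  pose proof (mpow_growth_ge1 nx A) as HM. set (M := mpow_growth nx A) in *.
  apply entire_of_exp_bound with (C1 + C2) M; [lra | lra |].
  intros p. unfold nominal_coef, Rdiv.
  pose proof (Rinv_0_lt_compat _ (INR_fact_lt_0 p)) as Hf.
  destruct p as [| q].
  - rewrite Rplus_0_r, Rabs_mult, (Rabs_right (/ _)) by lra.
    apply Rmult_le_compat_r; [lra |].
    eapply Rle_trans; [apply mpow_vec_bound; auto | simpl; fold C1; lra].
  - rewrite <- Rmult_plus_distr_r, Rabs_mult, (Rabs_right (/ _)) by lra.
    apply Rmult_le_compat_r; [lra |]. eapply Rle_trans; [apply Rabs_triang |].
    pose proof (mpow_vec_bound nx A (S q) c i Hi). pose proof (mpow_vec_bound nx A q bkc i Hi).
    fold C1 C2 M in H, H0.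
    assert (M ^ q <= M ^ S q) by (simpl; pose proof (pow_lt M q ltac:(lra)); nra).
    assert (M ^ q * C2 <= M ^ S q * C2) by (apply Rmult_le_compat_r; auto). nra.
Qed.

Lemma nominal_at_start a i : (i < nx)%nat -> nominal a a i = c i.
Proof.
  intros Hi. unfold nominal. replace (a - a) with 0 by ring. rewrite PSeries_0.
  unfold nominal_coef. rewrite mpow_vec_0 by auto. simpl. field.
Qed.

Lemma nominal_deriv a t i : (i < nx)%nat ->
  derivable_pt_lim (fun r => nominal a r i) t (mv nx A (nominal a t) i + bkc i + 0).
Proof.
  intros Hi. unfold nominal. rewrite Rplus_0_r.
  replace (mv nx A (fun j => PSeries (nominal_coef j) (t - a)) i + bkc i)
    with (PSeries (PS_derive (nominal_coef i)) (t - a));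
    [apply derivable_pt_lim_PSeries_shift, nominal_coef_entire; auto |].
  set (tau := t - a).
  pose proof (is_series_PSeries (PS_derive (nominal_coef i)) tau
                (entire_PS_derive _ (nominal_coef_entire i Hi))) as H1.
  apply is_series_unique.
  assert (H2 : is_series (fun n => fsum nx (fun j => A i j * (nominal_coef j n * tau ^ n))
                                   + (if Nat.eqb n 0 then bkc i else 0))
                 (mv nx A (fun j => PSeries (nominal_coef j) tau) i + bkc i)).
  { apply is_series_Rplus; [| apply is_series_first].
    apply is_series_fsum. intros j Hj.
    apply is_series_Rscal.
    apply is_series_PSeries, nominal_coef_entire; auto. }
  eapply is_series_ext_R; [| apply H2]. intros n. unfold PS_derive, nominal_coef.
  transitivity (mv nx A (mpow_vec nx A n c) i / INR (fact n) * tau ^ n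
    + match n with O => bkc i | S q => mv nx A (mpow_vec nx A q bkc) i / INR (fact n) * tau ^ n end).
  - unfold mv, Rdiv. destruct n; simpl.
    + f_equal. rewrite !fsum_mulr. apply fsum_ext; intros; ring.
    + rewrite Rplus_0_r, !fsum_mulr, <- fsum_plus. apply fsum_ext; intros; ring.
  - rewrite <- !mpow_vec_S by auto. destruct n.
    + simpl. rewrite mpow_vec_0 by auto. field.
    + rewrite <- (mpow_vec_S nx A n bkc i) by auto. unfold Rdiv.
      rewrite <- (INR_fact_S (S n)). unfold Rdiv. ring.
Qed.

Lemma abs_cont_nominal a lo hi i : (i < nx)%nat -> lo <= hi ->
  abs_cont_on (fun r => nominal a r i) lo hi.
Proof.
  intros Hi Hlh. set (f' := fun r => PSeries (PS_derive (nominal_coef i)) (r - a)).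
  assert (Hent := entire_PS_derive _ (nominal_coef_entire i Hi)).
  assert (Hc : forall r, continuity_pt (fun r => Rabs (f' r)) r).
  { intros r. apply (continuity_pt_comp f' Rabs); [| apply Rcontinuity_abs].
    apply (continuity_pt_comp (fun r => r - a) (PSeries (PS_derive (nominal_coef i)))).
    - apply continuity_pt_minus; [apply continuity_pt_id | apply continuity_pt_const]. intros u v; auto.
    - apply PSeries_continuity, Hent. }
  destruct (continuity_ab_maj (fun r => Rabs (f' r)) lo hi Hlh (fun r _ => Hc r)) as [Mx [HMx _]].
  apply abs_cont_of_deriv_bounded with f' (Rabs (f' Mx)); [apply Rabs_pos | | auto].
  intros t _. apply derivable_pt_lim_PSeries_shift, nominal_coef_entire; auto.
Qed.
End Nominal.

(* power-series coefficients of delta |-> int_0^delta exp (A s) B ds *)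
Definition Bdelta_coef nx A B i j p :=
  match p with O => 0 | S q => mm nx (mpow nx A q) B i j / INR (fact p) end.

Lemma Bdelta_coef_entire nx A B i j : (i < nx)%nat -> entire (Bdelta_coef nx A B i j).
Proof.
  intros Hi. set (Cb := fsum nx (fun l => Rabs (B l j))).
  assert (HCb : 0 <= Cb) by (apply fsum_nonneg; intros; apply Rabs_pos).
  pose proof (mpow_growth_ge1 nx A). set (M := mpow_growth nx A) in *.
  apply entire_of_exp_bound with Cb M; auto; [lra |].
  pose proof INR_fact_lt_0.
  intros [| q]; cbv beta iota delta [Bdelta_coef].
  - rewrite Rabs_R0. apply Rdiv_le_0_compat; auto. nra.
  - unfold Rdiv. rewrite Rabs_mult, (Rabs_right (/ _)) by (apply Rle_ge, Rlt_le, Rinv_0_lt_compat; auto).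
    apply Rmult_le_compat_r; [apply Rlt_le, Rinv_0_lt_compat; auto |].
    unfold mm. eapply Rle_trans; [apply fsum_abs |]. apply Rle_trans with (M ^ q * Cb).
    + unfold Cb. rewrite <- fsum_scal. apply fsum_le; intros. rewrite Rabs_mult.
      apply Rmult_le_compat_r; [apply Rabs_pos | apply mpow_entry_bound; auto].
    + change (M ^ S q) with (M * M ^ q). pose proof (pow_lt M q ltac:(lra)).
      assert (0 <= Cb * M ^ q * (M - 1)) by (apply Rmult_le_pos; [apply Rmult_le_pos |]; lra). lra.
Qed.

(* Term-by-term integration of the exponential series, by the fundamental theorem of calculus. *)
Lemma Bdelta_is_series nx nu A B delta Bd : is_Bdelta nx nu A B delta Bd ->
  forall i j, (i < nx)%nat -> (j < nu)%nat ->
  is_series (fun p => Bdelta_coef nx A B i j p * delta ^ p) (Bd i j).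
Proof.
  intros [E [HE Hint]] i j Hi Hj. destruct (Hint i j Hi Hj) as [pr Hpr].
  assert (Hrad := Bdelta_coef_entire nx A B i j Hi).
  assert (Hf : forall s, mm nx (E s) B i j = PSeries (PS_derive (Bdelta_coef nx A B i j)) s).
  { intros s. rewrite <- (is_series_unique _ _ (is_series_PSeries _ s (entire_PS_derive _ Hrad))).
    symmetry. apply is_series_unique.
    assert (H1 : is_series (fun p => fsum nx (fun l => B l j * (mpow nx A p i l / INR (fact p) * s ^ p)))
                           (mm nx (E s) B i j)).
    { unfold mm. rewrite (fsum_ext nx _ (fun l => B l j * E s i l)) by (intros; ring).
      apply is_series_fsum. intros l Hl.
      apply is_series_Rscal.
      apply expm_is_series; auto. }
    eapply is_series_ext_R; [| apply H1]. intros n. unfold PS_derive, Bdelta_coef. unfold mm at 1.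
    unfold Rdiv. rewrite fsum_mulr, <- fsum_scal, fsum_mulr.
    apply fsum_ext; intros. rewrite fact_simpl, mult_INR. field.
    split; [apply INR_fact_neq_0 | apply not_0_INR; lia]. }
  assert (HR1 : is_RInt (PSeries (PS_derive (Bdelta_coef nx A B i j))) 0 delta (RiemannInt pr)).
  { eapply is_RInt_ext; [| apply ex_RInt_Reals_aux_1]. intros; apply Hf. }
  assert (HR2 : is_RInt (PSeries (PS_derive (Bdelta_coef nx A B i j))) 0 delta
                  (PSeries (Bdelta_coef nx A B i j) delta - PSeries (Bdelta_coef nx A B i j) 0)).
  { apply (is_RInt_derive (PSeries (Bdelta_coef nx A B i j))).
    - intros; apply is_derive_PSeries; auto.
    - intros x _. apply continuity_pt_filterlim, PSeries_continuity, entire_PS_derive; auto. }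
  pose proof (is_RInt_unique _ _ _ _ HR1) as E1. pose proof (is_RInt_unique _ _ _ _ HR2) as E2.
  rewrite E1, PSeries_0 in E2. cbv beta iota delta [Bdelta_coef] in E2.
  rewrite <- Hpr, E2, Rminus_0_r. apply is_series_PSeries; auto.
Qed.

Lemma nominal_step nx nu A B K c a delta Ad Bd i : (i < nx)%nat ->
  is_expm nx A delta Ad -> is_Bdelta nx nu A B delta Bd ->
  nominal nx nu A B c (mv nx K c) a (a + delta) i = mv nx Ad c i + mv nu Bd (mv nx K c) i.
Proof.
  intros Hi HAd HBd. set (kc := mv nx K c).
  unfold nominal. replace (a + delta - a) with delta by ring.
  rewrite <- (is_series_unique _ _ (is_series_PSeries _ delta (nominal_coef_entire nx nu A B c kc i Hi))).
  apply is_series_unique.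
  assert (H1 : is_series (fun p => fsum nx (fun j => c j * (mpow nx A p i j / INR (fact p) * delta ^ p)))
                         (mv nx Ad c i)).
  { unfold mv. rewrite (fsum_ext nx _ (fun j => c j * Ad i j)) by (intros; ring).
    apply is_series_fsum. intros j Hj.
    apply is_series_Rscal.
    apply expm_is_series; auto. }
  assert (H2 : is_series (fun p => fsum nu (fun j => kc j * (Bdelta_coef nx A B i j p * delta ^ p)))
                         (mv nu Bd kc i)).
  { unfold mv. rewrite (fsum_ext nu _ (fun j => kc j * Bd i j)) by (intros; ring).
    apply is_series_fsum. intros j Hj.
    apply is_series_Rscal.
    apply (Bdelta_is_series nx nu A B delta Bd HBd); auto. }
  eapply is_series_ext_R; [| apply (is_series_Rplus _ _ _ _ H1 H2)]. intros p.
  unfold nominal_coef, mpow_vec. destruct p as [| q]; cbv beta iota delta [Bdelta_coef].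
  - rewrite (fsum_ext nu _ (fun _ => 0)), fsum_zero by (intros; ring).
    unfold mv, Rdiv. rewrite !Rplus_0_r, !fsum_mulr. apply fsum_ext; intros; ring.
  - rewrite <- (mv_mm nu nx). unfold mv, Rdiv. rewrite Rmult_plus_distr_r, !fsum_mulr.
    f_equal; apply fsum_ext; intros; ring.
Qed.

(** * The closed loop *)

Lemma vnorm_le_wnorm_d nx d nn s : vnorm nx (d s) <= wnorm nx d nn s.
Proof.
  unfold wnorm. rewrite <- (sqrt_pow2 (vnorm nx (d s))) at 1 by apply vnorm_nonneg.
  apply sqrt_le_1_alt. pose proof (pow2_ge_0 (vnorm nx (nn s))). lra.
Qed.

Lemma vnorm_le_wnorm_n nx d nn s : vnorm nx (nn s) <= wnorm nx d nn s.
Proof.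
  unfold wnorm. rewrite <- (sqrt_pow2 (vnorm nx (nn s))) at 1 by apply vnorm_nonneg.
  apply sqrt_le_1_alt. pose proof (pow2_ge_0 (vnorm nx (d s))). lra.
Qed.

Lemma sampling_gain_bound mu del sig nphi : del > 0 -> sig > 0 -> 0 <= nphi ->
  (mu > 0 -> del <= / mu * ln ((sig / (1 + sig)) * mu / Rmax nphi 1 + 1)) ->
  (mu <= 0 -> del <= (sig / (1 + sig)) * / Rmax nphi 1) ->
  exp_gain (Rmax mu 0) del * nphi <= sig / (1 + sig).
Proof.
  intros Hd Hs Hn H1 H2. set (Mx := Rmax nphi 1).
  assert (HMx : 1 <= Mx) by apply Rmax_r. assert (HnM : nphi <= Mx) by apply Rmax_l.
  assert (Hk : 0 < sig / (1 + sig)) by (apply Rdiv_lt_0_compat; lra).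
  pose proof (exp_gain_nonneg (Rmax mu 0) del (Rmax_r mu 0) ltac:(lra)).
  apply Rle_trans with (exp_gain (Rmax mu 0) del * Mx); [apply Rmult_le_compat_l; auto |].
  unfold exp_gain. destruct (Rle_dec (Rmax mu 0) 0) as [Hle | Hlt].
  - assert (Hmu0 : mu <= 0) by (pose proof (Rmax_l mu 0); lra).
    specialize (H2 Hmu0). fold Mx in H2. apply Rmult_le_compat_r with (r := Mx) in H2; [| lra].
    replace (sig / (1 + sig) * / Mx * Mx) with (sig / (1 + sig)) in H2 by (field; lra). auto.
  - assert (Hmu : mu > 0) by (apply Rnot_le_lt; intro; apply Hlt, Rmax_lub; lra).
    rewrite Rmax_left by lra. specialize (H1 Hmu). fold Mx in H1.
    set (X := sig / (1 + sig) * mu / Mx). assert (HX : 0 < X) by (unfold X; apply Rdiv_lt_0_compat; nra).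
    assert (Hln : mu * del <= ln (X + 1)).
    { apply Rmult_le_compat_l with (r := mu) in H1; [| lra].
      rewrite <- Rmult_assoc, Rinv_r, Rmult_1_l in H1 by lra. auto. }
    apply exp_le in Hln. rewrite exp_ln in Hln by lra.
    apply Rle_trans with (X / mu * Mx); [| unfold X; right; field; lra].
    apply Rmult_le_compat_r; [lra |].
    unfold Rdiv. apply Rmult_le_compat_r; [apply Rlt_le, Rinv_0_lt_compat |]; lra.
Qed.

Lemma error_absorption sigma kap E X c : sigma > 0 -> 0 <= kap -> kap * (1 + sigma) <= sigma ->
  0 <= E -> 0 <= X -> E <= kap * (E + X) + c -> E <= sigma * X + (1 + sigma) * c.
Proof.
  intros Hs Hk0 Hk HE HX H.
  assert (1 <= (1 + sigma) * (1 - kap)) by nra.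
  assert (E <= (1 + sigma) * (1 - kap) * E) by nra.
  assert ((1 + sigma) * ((1 - kap) * E) <= (1 + sigma) * (kap * X + c))
    by (apply Rmult_le_compat_l; lra).
  nra.
Qed.

Section ClosedLoop.
Variables (nx nu : nat) (A B K Ad Bd : mat) (del mu normPhi W : R) (x0 : vec)
  (u d nn x : R -> vec) (z0 t : R) (p : nat).
Hypotheses (Hdel : del > 0) (Hmu : 0 <= mu)
  (HA : forall v, dot nx v (mv nx A v) <= mu * dot nx v v)
  (HAd : is_expm nx A del Ad) (HBd : is_Bdelta nx nu A B del Bd)
  (HnPhi : is_spec_norm nx nx (madd A (mm nu B K)) normPhi)
  (Hsol : is_solution nx nu A B u d x0 x)
  (Hz0 : 0 <= z0) (Ht : z0 + INR p * del <= t < z0 + INR (S p) * del)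
  (HW : forall s, 0 <= s <= t -> wnorm nx d nn s <= W).

Let al q := alpha nx nu Ad Bd K (vadd (x z0) (nn z0)) q.

Hypothesis Hu : forall q r, (q <= p)%nat ->
  z0 + INR q * del <= r < z0 + INR (S q) * del -> r <= t ->
  forall i, (i < nu)%nat -> u r i = mv nx K (al q) i.

Let Nsol r := 0 <= r /\ ~ (forall i, (i < nx)%nat ->
  derivable_pt_lim (fun s => x s i) r (mv nx A (x r) i + mv nu B (u r) i + d r i)).

Lemma solution_null : null_set Nsol.
Proof. apply Hsol. Qed.

Lemma solution_deriv r : 0 <= r -> ~ Nsol r -> forall i, (i < nx)%nat ->
  derivable_pt_lim (fun s => x s i) r (mv nx A (x r) i + mv nu B (u r) i + d r i).
Proof. intros Hr Hn. apply NNPP. intros Hn2. apply Hn. split; auto. Qed.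

Lemma abs_cont_solution i a b : (i < nx)%nat -> 0 <= a -> a <= b ->
  abs_cont_on (fun s => x s i) a b.
Proof. intros Hi Ha Hab. apply (abs_cont_restrict _ 0 b); try lra. apply Hsol; auto; lra. Qed.

Lemma W_nonneg : 0 <= W.
Proof.
  pose proof (pos_INR p). assert (0 <= t) by nra.
  eapply Rle_trans; [| apply (HW 0)]; [apply sqrt_pos | lra].
Qed.

Let rate := exp (mu * del).
Let gain := exp_gain mu del.
Let Lam := rate + gain + 1.

(* On a completed actuator period the prediction follows the nominal trajectory. *)
Lemma subsample_error_step q : (S q <= p)%nat ->
  vnorm nx (vsub (al (S q)) (x (z0 + INR (S q) * del)))
  <= rate * vnorm nx (vsub (al q) (x (z0 + INR q * del))) + W * gain.
Proof.
  intros Hq. set (a := z0 + INR q * del).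
  pose proof (pos_INR q). assert (Ha0 : 0 <= a) by (unfold a; nra).
  assert (Hqp : INR (S q) <= INR p) by (apply le_INR; lia).
  assert (Eend : z0 + INR (S q) * del = a + del) by (unfold a; rewrite S_INR; ring).
  assert (Hend : a + del <= t) by (rewrite S_INR in Hqp; unfold a; nra).
  set (y := nominal nx nu A B (al q) (mv nx K (al q)) a).
  assert (Hxd : forall r, a <= r < a + del -> ~ Nsol r -> forall i, (i < nx)%nat ->
    derivable_pt_lim (fun s => x s i) r (mv nx A (x r) i + mv nu B (mv nx K (al q)) i + d r i)).
  { intros r Hr Hn i Hi. rewrite <- (mv_ext nu B (u r)); [apply solution_deriv; auto; lra |].
    intros j Hj. apply Hu; [lia | unfold a in *; rewrite S_INR in *; lra | lra | auto]. }
  pose proof (comparison nx A mu (mv nu B (mv nx K (al q))) x y d (fun _ _ => 0) a (a + del)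
                Nsol 0 W Hmu ltac:(lra) ltac:(lra) W_nonneg HA) as Hcmp.
  rewrite Eend. replace (a + del - a) with del in Hcmp by ring.
  rewrite (vnorm_ext nx (vsub (y a) (x a)) (vsub (al q) (x a))),
    (vnorm_ext nx (vsub (y (a + del)) (x (a + del))) (vsub (al (S q)) (x (a + del)))),
    Rplus_0_l in Hcmp.
  - apply Hcmp.
    + intros i Hi. apply abs_cont_solution; auto; lra.
    + intros i Hi. apply abs_cont_nominal; auto; lra.
    + apply solution_null.
    + apply Hxd.
    + intros r Hr i Hi. apply nominal_deriv; auto.
    + intros r Hr. eapply Rle_trans; [apply vnorm_le_wnorm_d | apply HW; lra].
    + intros r Hr. rewrite vnorm_eq0; auto; lra.
  - intros i Hi. unfold vsub, y. rewrite (nominal_step nx nu A B K (al q) a del Ad Bd i Hi HAd HBd).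
    reflexivity.
  - intros i Hi. unfold vsub, y. rewrite nominal_at_start; auto.
Qed.

Lemma subsample_error q : (q <= p)%nat ->
  vnorm nx (vsub (al q) (x (z0 + INR q * del))) <= Lam ^ q * W.
Proof.
  pose proof W_nonneg.
  assert (1 <= rate) by (unfold rate; rewrite <- exp_0; apply exp_le; nra).
  assert (0 <= gain) by (apply exp_gain_nonneg; lra).
  induction q; intros Hq.
  - rewrite Rmult_0_l, Rplus_0_r, pow_O, Rmult_1_l.
    rewrite (vnorm_ext nx _ (nn z0)) by (intros i Hi; unfold al, vsub, vadd; simpl; ring).
    eapply Rle_trans; [apply vnorm_le_wnorm_n | apply HW; pose proof (pos_INR p); nra].
  - pose proof (subsample_error_step q Hq). specialize (IHq ltac:(lia)).
    assert (1 <= Lam ^ q) by (apply pow_R1_Rle; unfold Lam; lra).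
    assert (rate * vnorm nx (vsub (al q) (x (z0 + INR q * del))) <= rate * (Lam ^ q * W))
      by (apply Rmult_le_compat_l; lra).
    assert (W * gain <= (Lam ^ q * W) * gain) by (apply Rmult_le_compat_r; nra).
    replace (Lam ^ S q * W) with (rate * (Lam ^ q * W) + Lam ^ q * W * gain + Lam ^ q * W)
      by (simpl; unfold Lam; ring).
    nra.
Qed.

(* Inside the current period the prediction is constant, so it drifts from x at rate
   at most |Phi al| + |d|. *)
Lemma intersample_error :
  vnorm nx (vsub (al p) (x t))
  <= exp (mu * (t - (z0 + INR p * del))) * vnorm nx (vsub (al p) (x (z0 + INR p * del)))
     + (normPhi * vnorm nx (al p) + W) * exp_gain mu (t - (z0 + INR p * del)).
Proof.
  set (t0 := z0 + INR p * del).
  pose proof (pos_INR p). assert (Ht0 : 0 <= t0) by (unfold t0; nra).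
  set (bk := mv nu B (mv nx K (al p))).
  assert (HnP := spec_norm_nonneg _ _ _ _ HnPhi).
  pose proof (vnorm_nonneg nx (al p)).
  apply (comparison nx A mu bk x (fun _ => al p) d (fun _ i => - (mv nx A (al p) i + bk i))
           t0 t Nsol (normPhi * vnorm nx (al p)) W); auto.
  - unfold t0; lra.
  - nra.
  - apply W_nonneg.
  - intros i Hi. apply abs_cont_solution; auto; unfold t0 in *; lra.
  - intros i Hi. apply abs_cont_const.
  - apply solution_null.
  - intros r Hr Hn i Hi. unfold bk. rewrite <- (mv_ext nu B (u r) (mv nx K (al p)) i);
      [apply solution_deriv; auto; unfold t0 in *; lra |].
    intros j Hj. apply Hu; auto; unfold t0 in *; lra.
  - intros r Hr i Hi.
    replace (mv nx A (al p) i + bk i + - (mv nx A (al p) i + bk i)) with 0 by ring.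
    apply derivable_pt_lim_const.
  - intros r Hr. eapply Rle_trans; [apply vnorm_le_wnorm_d | apply HW; unfold t0 in *; lra].
  - intros r Hr. rewrite (vnorm_opp nx (fun i => mv nx A (al p) i + bk i)).
    rewrite (vnorm_ext nx _ (mv nx (madd A (mm nu B K)) (al p)));
      [apply spec_norm_bound; auto |].
    intros i Hi. unfold bk. rewrite mv_madd, mv_mm; auto.
Qed.

Lemma prediction_error_bound sigma h : sigma > 0 -> (p < h)%nat ->
  exp_gain mu del * normPhi <= sigma / (1 + sigma) ->
  vnorm nx (vsub (al p) (x t))
  <= sigma * vnorm nx (x t) + (1 + sigma) * (rate * Lam ^ h + gain) * W.
Proof.
  intros Hs Hh Hkap.
  set (s := t - (z0 + INR p * del)).
  assert (Hs0 : 0 <= s) by (unfold s; lra).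
  assert (Hs1 : s <= del) by (unfold s; rewrite S_INR in Ht; lra).
  pose proof W_nonneg. pose proof (spec_norm_nonneg _ _ _ _ HnPhi).
  assert (Hexp : exp (mu * s) <= rate) by (apply exp_le; nra).
  assert (Hg : exp_gain mu s <= gain) by (apply exp_gain_mono; auto).
  assert (Hg0 : 0 <= exp_gain mu s) by (apply exp_gain_nonneg; auto).
  assert (HE0 : vnorm nx (vsub (al p) (x (z0 + INR p * del))) <= Lam ^ h * W).
  { eapply Rle_trans; [apply subsample_error; lia |].
    apply Rmult_le_compat_r; auto. apply Rle_pow; [| lia].
    pose proof (exp_pos (mu * del)). pose proof (exp_gain_nonneg mu del Hmu ltac:(lra)).
    unfold Lam, rate, gain; lra. }
  assert (Hal : vnorm nx (al p) <= vnorm nx (vsub (al p) (x t)) + vnorm nx (x t)).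
  { rewrite (vnorm_ext nx (al p) (vadd (vsub (al p) (x t)) (x t))); [apply vnorm_triang |].
    intros i Hi; unfold vadd, vsub; ring. }
  pose proof intersample_error as Hint. fold s in Hint.
  pose proof (vnorm_nonneg nx (vsub (al p) (x (z0 + INR p * del)))).
  rewrite Rmult_assoc.
  apply (error_absorption sigma (exp_gain mu s * normPhi));
    auto using vnorm_nonneg; [nra | |].
  - apply Rle_trans with (sigma / (1 + sigma) * (1 + sigma)); [| right; field; lra].
    apply Rmult_le_compat_r; [lra |]. eapply Rle_trans; [| apply Hkap].
    apply Rmult_le_compat_r; auto.
  - eapply Rle_trans; [apply Hint |].
    assert (exp (mu * s) * vnorm nx (vsub (al p) (x (z0 + INR p * del))) <= rate * (Lam ^ h * W))
      by (apply Rmult_le_compat; auto; apply Rlt_le, exp_pos).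
    assert (W * exp_gain mu s <= W * gain) by (apply Rmult_le_compat_l; auto).
    assert (normPhi * vnorm nx (al p) * exp_gain mu s
            <= exp_gain mu s * normPhi * (vnorm nx (vsub (al p) (x t)) + vnorm nx (x t)))
      by (rewrite (Rmult_comm _ (exp_gain mu s)), Rmult_assoc; apply Rmult_le_compat_l; nra).
    nra.
Qed.
End ClosedLoop.

Theorem lemma2 (nx nu : nat) (A B K : mat) (Delta : R) (b h : nat)
  (M P : mat) (gamma1 gamma2 muA normPhi sigma : R) (Ad Bd : mat) :
  stabilizable nx nu A B ->
  hurwitz nx (madd A (mm nu B K)) ->
  Delta > 0 -> (1 <= b)%nat -> (1 <= h)%nat ->
  is_expm nx A (Delta / INR b) Ad ->
  is_Bdelta nx nu A B (Delta / INR b) Bd ->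
  pos_def nx M ->
  (forall i j, (i < nx)%nat -> (j < nx)%nat ->
     madd (madd (mm nx (mtr (madd A (mm nu B K))) P)
                (mm nx P (madd A (mm nu B K)))) M i j = 0) ->
  is_min_eig nx M gamma1 ->
  is_spec_norm nx nx (mscal 2 (mm nu (mm nx P B) K)) gamma2 ->
  is_log_norm nx A muA ->
  is_spec_norm nx nx (madd A (mm nu B K)) normPhi ->
  sigma > 0 -> gamma1 - sigma * gamma2 > 0 ->
  (muA > 0 -> Delta / INR b <=
     / muA * ln ((sigma / (1 + sigma)) * muA / Rmax normPhi 1 + 1)) ->
  (muA <= 0 -> Delta / INR b <= (sigma / (1 + sigma)) * / Rmax normPhi 1) ->
  exists rho, rho > 0 /\
  forall (hs tau z : nat -> R) (x0 : vec) (d nn u x : R -> vec),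
    (forall j, hs j < hs (S j)) -> (forall j, tau j >= 0) ->
    success_seq Delta hs tau z ->
    measurable_vfun nx d -> measurable_vfun nx nn ->
    bounded_vfun nx d -> bounded_vfun nx nn ->
    (forall t, 0 <= t < z O -> forall i, (i < nu)%nat -> u t i = 0) ->
    (forall m p t, (p < h)%nat ->
       z m + INR p * (Delta / INR b) <= t -> t < z (S m) ->
       (p = (h - 1)%nat \/ t < z m + INR (S p) * (Delta / INR b)) ->
       forall i, (i < nu)%nat ->
         u t i = mv nx K (alpha nx nu Ad Bd K (vadd (x (z m)) (nn (z m))) p) i) ->
    is_solution nx nu A B u d x0 x ->
    forall m p t W, (p < h)%nat ->
      z m + INR p * (Delta / INR b) <= t ->
      t < z m + INR (S p) * (Delta / INR b) -> t < z (S m) ->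
      is_wsup nx d nn t W ->
      vnorm nx (vsub (alpha nx nu Ad Bd K (vadd (x (z m)) (nn (z m))) p) (x t))
        <= sigma * vnorm nx (x t) + rho * W.
Proof.
  intros _ _ HDelta Hb _ HAd HBd _ _ _ _ HmuA HnPhi Hsig _ Hc1 Hc2.
  set (del := Delta / INR b) in *.
  assert (Hdel : del > 0) by (apply Rdiv_lt_0_compat; [lra | apply lt_0_INR; lia]).
  set (mu := Rmax muA 0).
  assert (Hmu : 0 <= mu) by apply Rmax_r.
  assert (HA : forall v, dot nx v (mv nx A v) <= mu * dot nx v v).
  { intros v. pose proof (log_norm_quad nx A muA HmuA v). pose proof (dot_self_nonneg nx v).
    pose proof (Rmax_l muA 0). unfold mu. nra. }
  pose proof (sampling_gain_bound muA del sigma normPhi Hdel Hsig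
                (spec_norm_nonneg _ _ _ _ HnPhi) Hc1 Hc2) as Hkap.
  set (rate := exp (mu * del)). set (gain := exp_gain mu del).
  assert (0 < rate) by apply exp_pos.
  assert (0 <= gain) by (apply exp_gain_nonneg; lra).
  set (C := rate * (rate + gain + 1) ^ h + gain).
  assert (0 <= C) by (pose proof (pow_le (rate + gain + 1) h ltac:(lra)); unfold C; nra).
  exists ((1 + sigma) * C + 1). split; [nra |].
  intros hs tau z x0 d nn u x _ _ [Hsucc _] _ _ _ _ _ Hu Hsol m p t W Hp Ht1 Ht2 Ht3 [HW _].
  assert (Hz : 0 <= z m).
  { destruct (Hsucc m) as [k [-> _]]. apply Rmult_le_pos; [apply pos_INR | lra]. }
  assert (HWt : forall s, 0 <= s <= t -> wnorm nx d nn s <= W) by (intros s Hs; apply HW; eauto).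
  assert (HW0 : 0 <= W).
  { pose proof (pos_INR p). apply Rle_trans with (wnorm nx d nn 0); [apply sqrt_pos | apply HWt; split; nra]. }
  eapply Rle_trans.
  - apply (prediction_error_bound nx nu A B K Ad Bd del mu normPhi W x0 u d nn x (z m) t p)
      with (sigma := sigma) (h := h); auto.
    intros q r Hq [Hr1 Hr2] Hrt i Hi. apply Hu; auto; lia || lra.
  - fold rate gain. fold C. nra.
Qed.
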